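(* Let $n\neq1$, $p\neq0$, $b\neq0$ (so equation (A) is multi-dimensional, hyperbolic and quasilinear). Consider the vector fields $\hat X_1=\partial_t$; $\hat X_2=t\partial_t+r\partial_r$; $\hat X_3=\tfrac12pbr\,\partial_r+(bu+pc)\partial_u$; $\hat X_4=(a+b+(1-p)c)r^{3-n}\partial_r+(2-n)r^{2-n}\big((b+(1-p)c)u+pc\big)\partial_u$; $\hat X_5=\tfrac12pbr\ln r\,\partial_r+(1+\ln r)(bu+pc)\partial_u$; $\hat X_6=t^2\partial_t+tu\partial_u$. Then the Lie algebra of point symmetries of (A) is spanned by $\hat X_1,\hat X_2$ together with: $\hat X_3$ iff $c(p-1)=0$; $\hat X_4$ iff $c(p-1)=0$, $n\neq2$ and $(a+b+(1-p)c)(n-3)=bp(n/2-1)$; $\hat X_5$ iff $c(p-1)=0$, $n=2$ and $a=-b$; $\hat X_6$ iff $c=0$ and $p=-4$. In particular, if $c\neq0$ and $p\neq1$ the algebra is 2-dimensional, spanned by $\hat X_1,\hat X_2$. Whenever the relevant generators are present, their commutators are $[\hat X_1,\hat X_2]=\hat X_1$, $[\hat X_1,\hat X_3]=[\hat X_2,\hat X_3]=0$, $[\hat X_1,\hat X_4]=0$, $[\hat X_2,\hat X_4]=(2-n)\hat X_4$, $[\hat X_3,\hat X_4]=p(1-n/2)b\,\hat X_4$, $[\hat X_1,\hat X_5]=0$, $[\hat X_2,\hat X_5]=\hat X_3$, $[\hat X_3,\hat X_5]=\tfrac{pb}{2}\hat X_3$, $[\hat X_1,\hat X_6]=2\hat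 X_2+\tfrac1b\hat X_3$, $[\hat X_2,\hat X_6]=\hat X_6$, $[\hat X_3,\hat X_6]=[\hat X_4,\hat X_6]=[\hat X_5,\hat X_6]=0$.
   Context: Equation (A) is $u_{tt}=(c+bu^{p})\big(u_{rr}+\frac{n-1}{r}u_{r}\big)+au^{p-1}u_{r}^{2}$ for $u(t,r)$, $r>0$, $u>0$, with real constants $a,b,c$, $p\neq0$ and real $n$. A point symmetry is a vector field $\hat X=\tau(t,r,u)\partial_t+\xi(t,r,u)\partial_r+\eta(t,r,u)\partial_u$ whose prolongation leaves the equation invariant; equivalently, $P=\eta-\tau u_t-\xi u_r$ satisfies the linearized (Fréchet derivative) equation of (A) on all solutions. Point symmetries form a Lie algebra under the vector field commutator $[\hat X,\hat Y]=\hat X\hat Y-\hat Y\hat X$. *)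

From Stdlib Require Import Reals List.
Import ListNotations.
Open Scope R_scope.

(* Functions of (t, r, u); the relevant domain is t in R, r > 0, u > 0. *)
Definition fn3 := R -> R -> R -> R.

(* A vector field  tau d_t + xi d_r + eta d_u. *)
Record VF := mkVF { vt : fn3; vr : fn3; vu : fn3 }.

Definition comp (X : VF) (k : nat) : fn3 :=
  match k with O => vt X | S O => vr X | _ => vu X end.

Definition pd (i : nat) (F G : fn3) : Prop :=
  forall t r u, 0 < r -> 0 < u ->
    match i with
    | O => derivable_pt_lim (fun s => F s r u) t (G t r u)
    | S O => derivable_pt_lim (fun s => F t s u) r (G t r u)
    | _ => derivable_pt_lim (fun s => F t r s) u (G t r u)
    end.

(* D is a full family of iterated partial derivatives of F (hence F is C^infty
   on the domain): D [] = F and D (i :: l) = d_i (D l). *)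
Definition derivs_of (F : fn3) (D : list nat -> fn3) : Prop :=
  D nil = F /\ forall (l : list nat) (i : nat), (i < 3)%nat -> pd i (D l) (D (i :: l)).

(* pr^(2) X applied to
   Delta = u_tt - (c + b u^p)(u_rr + (n-1)/r u_r) - a u^(p-1) u_r^2,
   evaluated on the solution manifold Delta = 0 (u_tt eliminated), at the jet
   point (t, r, u, u_t, u_r, u_tr, u_rr).  Standard prolongation formulas:
   eta^J,i = D_i eta^J - sum_k u_{J,k} D_i xi^k. *)
Definition prolong_residual (a b c p n : R) (Dt Dx De : list nat -> fn3)
    (t r u ut ur utr urr : R) : R :=
  let utt := (c + b * Rpower u p) * (urr + (n - 1) / r * ur)
             + a * Rpower u (p - 1) * ur ^ 2 in
  let g (D : list nat -> fn3) (l : list nat) := D l t r u in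
  let DT D := g D [0%nat] + g D [2%nat] * ut in
  let DR D := g D [1%nat] + g D [2%nat] * ur in
  let DT2 D := g D [0%nat; 0%nat] + 2 * g D [2%nat; 0%nat] * ut
               + g D [2%nat; 2%nat] * ut ^ 2 + g D [2%nat] * utt in
  let DR2 D := g D [1%nat; 1%nat] + 2 * g D [2%nat; 1%nat] * ur
               + g D [2%nat; 2%nat] * ur ^ 2 + g D [2%nat] * urr in
  let eta_t := DT De - ut * DT Dt - ur * DT Dx in
  let eta_r := DR De - ut * DR Dt - ur * DR Dx in
  let eta_tt := DT2 De - ut * DT2 Dt - ur * DT2 Dx
                - 2 * utt * DT Dt - 2 * utr * DT Dx in
  let eta_rr := DR2 De - ut * DR2 Dt - ur * DR2 Dx
                - 2 * utr * DR Dt - 2 * urr * DR Dx in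
  let eta := g De nil in
  let xi := g Dx nil in
  eta_tt
  - b * p * Rpower u (p - 1) * eta * (urr + (n - 1) / r * ur)
  - (c + b * Rpower u p) * (eta_rr + (n - 1) / r * eta_r - (n - 1) / (r ^ 2) * xi * ur)
  - a * (p - 1) * Rpower u (p - 2) * eta * ur ^ 2
  - 2 * a * Rpower u (p - 1) * ur * eta_r.

Definition point_symmetry (a b c p n : R) (X : VF) : Prop :=
  exists Dt Dx De : list nat -> fn3,
    derivs_of (vt X) Dt /\ derivs_of (vr X) Dx /\ derivs_of (vu X) De /\
    forall t r u ut ur utr urr, 0 < r -> 0 < u ->
      prolong_residual a b c p n Dt Dx De t r u ut ur utr urr = 0.

Definition vf_zero : VF := mkVF (fun _ _ _ => 0) (fun _ _ _ => 0) (fun _ _ _ => 0).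
Definition vf_add (X Y : VF) : VF :=
  mkVF (fun t r u => vt X t r u + vt Y t r u)
       (fun t r u => vr X t r u + vr Y t r u)
       (fun t r u => vu X t r u + vu Y t r u).
Definition vf_scale (k : R) (X : VF) : VF :=
  mkVF (fun t r u => k * vt X t r u) (fun t r u => k * vr X t r u)
       (fun t r u => k * vu X t r u).
Definition vf_eq (X Y : VF) : Prop :=
  forall t r u, 0 < r -> 0 < u ->
    vt X t r u = vt Y t r u /\ vr X t r u = vr Y t r u /\ vu X t r u = vu Y t r u.

Definition is_bracket (X Y Z : VF) : Prop :=
  exists DX DY : nat -> nat -> fn3,
    (forall k j, (k < 3)%nat -> (j < 3)%nat ->
       pd j (comp X k) (DX k j) /\ pd j (comp Y k) (DY k j)) /\
    forall t r u, 0 < r -> 0 < u -> forall k, (k < 3)%nat ->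
      comp Z k t r u =
        (comp X 0 t r u * DY k 0%nat t r u - comp Y 0 t r u * DX k 0%nat t r u)
      + (comp X 1 t r u * DY k 1%nat t r u - comp Y 1 t r u * DX k 1%nat t r u)
      + (comp X 2 t r u * DY k 2%nat t r u - comp Y 2 t r u * DX k 2%nat t r u).

Definition X1 : VF := mkVF (fun _ _ _ => 1) (fun _ _ _ => 0) (fun _ _ _ => 0).
Definition X2 : VF := mkVF (fun t _ _ => t) (fun _ r _ => r) (fun _ _ _ => 0).
Definition X3 (b c p : R) : VF :=
  mkVF (fun _ _ _ => 0) (fun _ r _ => / 2 * p * b * r) (fun _ _ u => b * u + p * c).
Definition X4 (a b c p n : R) : VF :=
  mkVF (fun _ _ _ => 0)
       (fun _ r _ => (a + b + (1 - p) * c) * Rpower r (3 - n))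
       (fun _ r u => (2 - n) * Rpower r (2 - n) * ((b + (1 - p) * c) * u + p * c)).
Definition X5 (b c p : R) : VF :=
  mkVF (fun _ _ _ => 0) (fun _ r _ => / 2 * p * b * r * ln r)
       (fun _ r u => (1 + ln r) * (b * u + p * c)).
Definition X6 : VF := mkVF (fun t _ _ => t ^ 2) (fun _ _ _ => 0) (fun t _ u => t * u).

Definition cond3 (c p : R) : Prop := c * (p - 1) = 0.
Definition cond4 (a b c p n : R) : Prop :=
  c * (p - 1) = 0 /\ n <> 2 /\ (a + b + (1 - p) * c) * (n - 3) = b * p * (n / 2 - 1).
Definition cond5 (a b c p n : R) : Prop := c * (p - 1) = 0 /\ n = 2 /\ a = - b.
Definition cond6 (c p : R) : Prop := c = 0 /\ p = -4.

(* 1. Tools: constancy of functions with zero derivative, identities for real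
      powers, and the separation of the functions 1, u^p, u^(p-1) of u.
   2. Sufficiency: each generator X1..X6 has an explicit separated derivative
      family; the residual of the determining equation is linear in the
      families and vanishes on each generator under its condition, so every
      admissible combination is a symmetry (comb_symmetry).  The same families
      compute the commutator table.
   3. Necessity: splitting the determining equation along the jet variables
      u_t, u_r, u_tr, u_rr and the powers of u gives tau = th(t), xi = xh(r),
      eta = A(t, r) u + B(t, r), subject to a reduced system of ODEs
      (symmetry_reduced).
   4. Solving the reduced system: th is quadratic, xh'' = C r^(1-n), and the
      remaining radial equation leaves room exactly for X4 (n <> 2) or X5
      (n = 2) (reduced_classification).
   theorem1 collects these facts. *)

From Pilot Require Import Defs.
From Stdlib Require Import Reals List Lra Lia Classical.
Import ListNotations.
Open Scope R_scope.

(* Derivative rules in which the derivative is only required to be equal to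
   the expected expression; this lets each rule be applied by unification and
   the algebra be discharged by [ring]/[field]. *)
Lemma dpl_plus f g x l1 l2 l : derivable_pt_lim f x l1 -> derivable_pt_lim g x l2 ->
  l = l1 + l2 -> derivable_pt_lim (fun y => f y + g y) x l.
Proof. intros H1 H2 ->. exact (derivable_pt_lim_plus f g x l1 l2 H1 H2). Qed.

Lemma dpl_minus f g x l1 l2 l : derivable_pt_lim f x l1 -> derivable_pt_lim g x l2 ->
  l = l1 - l2 -> derivable_pt_lim (fun y => f y - g y) x l.
Proof. intros H1 H2 ->. exact (derivable_pt_lim_minus f g x l1 l2 H1 H2). Qed.

Lemma dpl_mult f g x l1 l2 l : derivable_pt_lim f x l1 -> derivable_pt_lim g x l2 ->
  l = l1 * g x + f x * l2 -> derivable_pt_lim (fun y => f y * g y) x l.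
Proof. intros H1 H2 ->. exact (derivable_pt_lim_mult f g x l1 l2 H1 H2). Qed.

Lemma dpl_scal f k x l1 l : derivable_pt_lim f x l1 -> l = k * l1 ->
  derivable_pt_lim (fun y => k * f y) x l.
Proof. intros H1 ->. exact (derivable_pt_lim_scal f k x l1 H1). Qed.

Lemma dpl_mulc f k x l1 l : derivable_pt_lim f x l1 -> l = l1 * k ->
  derivable_pt_lim (fun y => f y * k) x l.
Proof.
  intros H1 ->. apply (dpl_mult f (fun _ => k) x l1 0); [exact H1| apply derivable_pt_lim_const| ring].
Qed.

Lemma dpl_linear k m x : derivable_pt_lim (fun y => m + k * y) x k.
Proof.
  apply (dpl_plus _ _ x 0 k); [apply derivable_pt_lim_const| |ring].
  apply (dpl_scal (fun y => y) k x 1); [apply derivable_pt_lim_id|ring].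
Qed.

Lemma dpl_square x : derivable_pt_lim (fun y => y ^ 2) x (2 * x).
Proof.
  replace (2 * x) with (INR 2 * x ^ (2 - 1)) by (simpl; ring).
  apply derivable_pt_lim_pow.
Qed.

Lemma const_of_deriv0 (dom : R -> Prop) f :
  (forall x y z, dom x -> dom y -> x <= z <= y -> dom z) ->
  (forall x, dom x -> derivable_pt_lim f x 0) ->
  forall x y, dom x -> dom y -> f x = f y.
Proof.
  intros Hconv H.
  assert (K : forall x y, dom x -> dom y -> x < y -> f x = f y).
  { intros x y Hx Hy Hxy.
    destruct (MVT_cor2 f (fun _ => 0) x y Hxy) as [z [Hz _]]; [|lra].
    intros z Hz. apply H, (Hconv x y); auto. }
  intros x y Hx Hy. destruct (Rtotal_order x y) as [h|[h|h]].
  - auto.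
  - now subst.
  - symmetry. auto.
Qed.

Lemma const_pos f : (forall x, 0 < x -> derivable_pt_lim f x 0) ->
  forall x y, 0 < x -> 0 < y -> f x = f y.
Proof. apply const_of_deriv0. intros; lra. Qed.

Lemma const_all f : (forall x, derivable_pt_lim f x 0) -> forall x y, f x = f y.
Proof. intros H x y. apply (const_of_deriv0 (fun _ => True)); auto. Qed.

Lemma deriv_unique_pos f g x l1 l2 : (forall s, 0 < s -> f s = g s) -> 0 < x ->
  derivable_pt_lim f x l1 -> derivable_pt_lim g x l2 -> l1 = l2.
Proof.
  intros E Hx H1 H2. apply (uniqueness_limite f x); auto.
  apply derivable_pt_lim_locally_ext with (f := g) (a := 0) (b := x + 1); auto; [lra|].
  intros; symmetry; apply E; lra.
Qed.

Lemma deriv_unique_all f g x l1 l2 : (forall s, f s = g s) ->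
  derivable_pt_lim f x l1 -> derivable_pt_lim g x l2 -> l1 = l2.
Proof.
  intros E H1 H2. apply (uniqueness_limite f x); auto.
  apply derivable_pt_lim_ext with (f := g); auto.
Qed.

Lemma deriv_const_pos f x l k : (forall s, 0 < s -> f s = k) -> 0 < x ->
  derivable_pt_lim f x l -> l = 0.
Proof. intros E Hx H. apply (deriv_unique_pos f (fun _ => k) x); auto. apply derivable_pt_lim_const. Qed.

Lemma deriv_const_all f x l k : (forall s, f s = k) -> derivable_pt_lim f x l -> l = 0.
Proof. intros E H. apply (deriv_unique_all f (fun _ => k) x); auto. apply derivable_pt_lim_const. Qed.

Lemma antiderivative_pos f f' g g' C :
  (forall r, 0 < r -> derivable_pt_lim f r (f' r)) ->
  (forall r, 0 < r -> derivable_pt_lim g r (g' r)) -> (forall r, 0 < r -> f' r = C * g' r) ->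
  forall r, 0 < r -> f r = C * g r + (f 1 - C * g 1).
Proof.
  intros Df Dg E r Hr.
  assert (K : f r - C * g r = f 1 - C * g 1).
  { apply (const_pos (fun r => f r - C * g r)); [|lra|lra]. intros x Hx.
    apply (dpl_minus _ _ x (f' x) (C * g' x)); [auto| apply (dpl_scal g C x (g' x)); auto|].
    rewrite E; auto; ring. }
  lra.
Qed.

Lemma Rpower_minus1 x m : 0 < x -> Rpower x (m - 1) = Rpower x m / x.
Proof. intros Hx. unfold Rminus. rewrite Rpower_plus, Rpower_Ropp, Rpower_1 by auto. reflexivity. Qed.

Lemma Rpower_minus_nat x m k : 0 < x -> Rpower x (m - INR k) = Rpower x m / x ^ k.
Proof.
  intros Hx. induction k as [|k IH].
  - simpl. rewrite Rminus_0_r. field.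
  - rewrite S_INR. replace (m - (INR k + 1)) with (m - INR k - 1) by ring.
    rewrite Rpower_minus1, IH by auto. simpl. field. split; [apply pow_nonzero|]; lra.
Qed.

Lemma Rpower_minus2 x m : 0 < x -> Rpower x (m - 2) = Rpower x m / x ^ 2.
Proof. intros Hx. exact (Rpower_minus_nat x m 2 Hx). Qed.

Lemma Rpower_neg1 x : 0 < x -> Rpower x (-1) = / x.
Proof. intros Hx. replace (-1) with (- (1)) by ring. rewrite Rpower_Ropp, Rpower_1 by auto. reflexivity. Qed.

Lemma Rpower_one_base x : Rpower 1 x = 1.
Proof. unfold Rpower. rewrite ln_1, Rmult_0_r. apply exp_0. Qed.

Lemma Rpower_ne1 r x : 1 < r -> x <> 0 -> Rpower r x <> 1.
Proof.
  intros Hr Hx E. rewrite <- (Rpower_O r) in E by lra.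
  destruct (Rtotal_order x 0) as [h|[h|h]]; [|contradiction|].
  - pose proof (Rpower_lt r x 0 Hr h). lra.
  - pose proof (Rpower_lt r 0 x Hr h). lra.
Qed.

Lemma Rpower_inj u v m : 0 < u -> 0 < v -> m <> 0 -> Rpower u m = Rpower v m -> u = v.
Proof.
  intros Hu Hv Hm E. unfold Rpower in E. apply exp_inv in E.
  apply ln_inv; auto. apply (Rmult_eq_reg_l m); auto.
Qed.

Lemma continuous_zero_off_point g u0 : 0 < u0 -> continuity_pt g u0 ->
  (forall v, 0 < v -> v <> u0 -> g v = 0) -> g u0 = 0.
Proof.
  intros Hu0 Hc Hz. destruct (Req_dec (g u0) 0) as [E|E]; [exact E|exfalso].
  assert (Heps : 0 < Rabs (g u0) / 2) by (pose proof (Rabs_pos_lt _ E); lra).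
  destruct (Hc _ Heps) as [d [Hd Hball]].
  set (v := u0 + Rmin (d / 2) (u0 / 2)).
  assert (Hm : 0 < Rmin (d / 2) (u0 / 2) <= d / 2)
    by (split; [apply Rmin_pos; lra| apply Rmin_l]).
  assert (Hv : g v = 0) by (apply Hz; unfold v; lra).
  assert (Hdist : R_dist v u0 < d)
    by (unfold R_dist, v; rewrite Rabs_right; lra).
  specialize (Hball v (conj (conj I (ltac:(unfold v; lra) : u0 <> v)) Hdist)).
  simpl in Hball. unfold R_dist in Hball. rewrite Hv, Rminus_0_l, Rabs_Ropp in Hball. lra.
Qed.

(* If (c + b u^p) g(u) = 0 for all u > 0, with b, p nonzero and g continuous,
   then g = 0: the factor c + b u^p vanishes at most at one point. *)
Lemma factor_cancel c b p g : b <> 0 -> p <> 0 ->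
  (forall u, 0 < u -> (c + b * Rpower u p) * g u = 0) ->
  (forall u, 0 < u -> continuity_pt g u) ->
  forall u, 0 < u -> g u = 0.
Proof.
  intros Hb Hp H Hc u Hu. destruct (Rmult_integral _ _ (H u Hu)) as [F0|G0]; [|exact G0].
  apply continuous_zero_off_point; auto.
  intros v Hv Hvu. destruct (Rmult_integral _ _ (H v Hv)) as [F1|F1]; [|exact F1].
  exfalso. apply Hvu, (Rpower_inj v u p); auto. apply (Rmult_eq_reg_l b); lra.
Qed.

(* Separation of the functions 1, u^p, u^(p-1) on (0, +oo): they are linearly
   independent unless p = 1, when 1 = u^(p-1). *)
Lemma separate_powers p al be ga : p <> 0 ->
  (forall u, 0 < u -> al + be * Rpower u p + ga * Rpower u (p - 1) = 0) ->
  be = 0 /\ (p <> 1 -> al = 0 /\ ga = 0) /\ (p = 1 -> al + ga = 0).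
Proof.
  intros Hp H.
  destruct (Req_dec p 1) as [E|E].
  - subst p. replace (1 - 1) with 0 in H by ring.
    pose proof (H 1 ltac:(lra)) as H1. pose proof (H 2 ltac:(lra)) as H2.
    rewrite Rpower_1, Rpower_O in H1, H2 by lra. lra.
  - set (q := Rpower 2 (p - 1)).
    assert (P2 : Rpower 2 p = 2 * q) by (unfold q; rewrite Rpower_minus1 by lra; field).
    assert (P4 : forall x, Rpower 4 x = Rpower 2 x * Rpower 2 x)
      by (intros; rewrite Rpower_mult_distr by lra; f_equal; ring).
    (* Evaluate at u = 1, 2, 4 and eliminate with q = 2^(p-1) <> 1, 1/2. *)
    pose proof (H 1 ltac:(lra)) as H1. pose proof (H 2 ltac:(lra)) as H2.
    pose proof (H 4 ltac:(lra)) as H4.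
    rewrite !Rpower_one_base in H1. rewrite P2 in H2. rewrite !P4, P2 in H4. fold q in H2, H4.
    assert (Hq1 : q <> 1) by (apply Rpower_ne1; lra).
    assert (Hq2 : 2 * q <> 1) by (rewrite <- P2; apply Rpower_ne1; lra).
    assert (Hq0 : 0 < q) by apply exp_pos.
    assert (Kb : - q * (2 * q - 1) * be = 0) by nra.
    assert (be = 0).
    { destruct (Rmult_integral _ _ Kb) as [K|K]; [|exact K].
      destruct (Rmult_integral _ _ K); lra. }
    subst be. assert (Kg : (q - 1) * ga = 0) by lra.
    destruct (Rmult_integral _ _ Kg); [lra|]. split; [reflexivity|]. split; intro; [lra|contradiction].
Qed.

Lemma quadratic_zero al be ga : (forall u, 0 < u -> al + be * u + ga * u ^ 2 = 0) ->
  ga = 0 /\ be = 0 /\ al = 0.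
Proof.
  intros H. pose proof (H 1 ltac:(lra)). pose proof (H 2 ltac:(lra)). pose proof (H 3 ltac:(lra)).
  simpl in *. lra.
Qed.

Lemma power_affine_zero k1 k2 q : q <> 0 ->
  (forall r, 0 < r -> k1 * Rpower r q + k2 = 0) -> k1 = 0 /\ k2 = 0.
Proof.
  intros Hq H. pose proof (H 1 ltac:(lra)) as E1. pose proof (H 2 ltac:(lra)) as E2.
  rewrite Rpower_one_base in E1. pose proof (Rpower_ne1 2 q ltac:(lra) Hq).
  assert (K : k1 * (Rpower 2 q - 1) = 0) by lra.
  destruct (Rmult_integral _ _ K); lra.
Qed.

Definition fam_ok (D : list nat -> fn3) : Prop :=
  forall l i, (i < 3)%nat -> pd i (D l) (D (i :: l)).

Lemma fam_dT D l t r u : fam_ok D -> 0 < r -> 0 < u ->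
  derivable_pt_lim (fun s => D l s r u) t (D (0%nat :: l) t r u).
Proof. intros H Hr Hu. apply (H l 0%nat); auto. Qed.

Lemma fam_dR D l t r u : fam_ok D -> 0 < r -> 0 < u ->
  derivable_pt_lim (fun s => D l t s u) r (D (1%nat :: l) t r u).
Proof. intros H Hr Hu. apply (H l 1%nat); auto. Qed.

Lemma fam_dU D l t r u : fam_ok D -> 0 < r -> 0 < u ->
  derivable_pt_lim (fun s => D l t r s) u (D (2%nat :: l) t r u).
Proof. intros H Hr Hu. apply (H l 2%nat); auto. Qed.

Lemma pd_ext i F G D : (forall t r u, 0 < r -> 0 < u -> F t r u = G t r u) -> pd i G D -> pd i F D.
Proof.
  intros HFG HG t r u Hr Hu. specialize (HG t r u Hr Hu).
  destruct i as [|[|i]].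
  - apply derivable_pt_lim_ext with (f := fun s => G s r u); auto.
    intros; symmetry; apply HFG; auto.
  - apply derivable_pt_lim_locally_ext with (f := fun s => G t s u) (a := 0) (b := r + 1); auto; [lra|].
    intros; symmetry; apply HFG; lra.
  - apply derivable_pt_lim_locally_ext with (f := fun s => G t r s) (a := 0) (b := u + 1); auto; [lra|].
    intros; symmetry; apply HFG; lra.
Qed.

Definition with_head (F : fn3) (D : list nat -> fn3) : list nat -> fn3 :=
  fun l => match l with nil => F | _ => D l end.

Lemma with_head_derivs F D : fam_ok D ->
  (forall t r u, 0 < r -> 0 < u -> F t r u = D nil t r u) -> derivs_of F (with_head F D).
Proof.
  intros HD HF. split; [reflexivity|]. intros [|x l] i Hi.
  - apply pd_ext with (G := D nil); [exact HF | apply HD; auto].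
  - apply HD; auto.
Qed.

Definition addD (D1 D2 : list nat -> fn3) : list nat -> fn3 :=
  fun l t r u => D1 l t r u + D2 l t r u.
Definition sclD (k : R) (D : list nat -> fn3) : list nat -> fn3 :=
  fun l t r u => k * D l t r u.

Lemma addD_ok D1 D2 : fam_ok D1 -> fam_ok D2 -> fam_ok (addD D1 D2).
Proof.
  intros H1 H2 l i Hi t r u Hr Hu. specialize (H1 l i Hi t r u Hr Hu).
  specialize (H2 l i Hi t r u Hr Hu). unfold addD.
  destruct i as [|[|i]]; apply derivable_pt_lim_plus; auto.
Qed.

Lemma sclD_ok k D : fam_ok D -> fam_ok (sclD k D).
Proof.
  intros H l i Hi t r u Hr Hu. specialize (H l i Hi t r u Hr Hu). unfold sclD.
  destruct i as [|[|i]]; apply derivable_pt_lim_scal; auto.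
Qed.

Fixpoint cnt (i : nat) (l : list nat) : nat :=
  match l with nil => O | j :: l' => if Nat.eqb i j then S (cnt i l') else cnt i l' end.

Definition smooth (dom : R -> Prop) (f : nat -> R -> R) : Prop :=
  forall k x, dom x -> derivable_pt_lim (f k) x (f (S k) x).

Definition prodD (f g h : nat -> R -> R) : list nat -> fn3 :=
  fun l t r u => f (cnt 0 l) t * g (cnt 1 l) r * h (cnt 2 l) u.

Lemma prodD_ok f g h : smooth (fun _ => True) f -> smooth (fun x => 0 < x) g ->
  smooth (fun x => 0 < x) h -> fam_ok (prodD f g h).
Proof.
  intros Hf Hg Hh l i Hi t r u Hr Hu.
  destruct i as [|[|[|i]]]; try lia; unfold prodD; simpl.
  - apply (dpl_mulc _ _ t (f (S (cnt 0 l)) t * g (cnt 1 l) r)); [|ring].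
    apply (dpl_mulc _ _ t (f (S (cnt 0 l)) t)); [apply Hf; auto| ring].
  - apply (dpl_mulc _ _ r (f (cnt 0 l) t * g (S (cnt 1 l)) r)); [|ring].
    apply (dpl_scal (g (cnt 1 l)) _ r (g (S (cnt 1 l)) r)); [apply Hg; auto| ring].
  - apply (dpl_scal (h (cnt 2 l)) _ u (h (S (cnt 2 l)) u)); [apply Hh; auto| ring].
Qed.

Definition cstF (a : R) : nat -> R -> R := fun k _ => match k with O => a | _ => 0 end.
Definition linF (a b : R) : nat -> R -> R :=
  fun k x => match k with O => a + b * x | S O => b | _ => 0 end.
Definition sqF : nat -> R -> R :=
  fun k x => match k with O => x ^ 2 | S O => 2 * x | S (S O) => 2 | _ => 0 end.
Fixpoint falling (m : R) (k : nat) : R :=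
  match k with O => 1 | S j => falling m j * (m - INR j) end.
Definition pwF (m : R) : nat -> R -> R := fun k x => falling m k * Rpower x (m - INR k).
Definition lnF : nat -> R -> R :=
  fun k x => match k with O => 1 + ln x | S j => pwF (-1) j x end.
Definition rlnF : nat -> R -> R :=
  fun k x => match k with O => x * ln x | S O => 1 + ln x | S (S j) => pwF (-1) j x end.

Lemma cstF_ok dom a : smooth dom (cstF a).
Proof. intros [|k] x _; apply derivable_pt_lim_const. Qed.

Lemma linF_ok dom a b : smooth dom (linF a b).
Proof. intros [|[|k]] x _; [apply dpl_linear| apply derivable_pt_lim_const..]. Qed.

Lemma sqF_ok dom : smooth dom sqF.
Proof.
  intros [|[|[|k]]] x _; cbn [sqF].
  - apply dpl_square.
  - apply (dpl_scal (fun y => y) 2 x 1); [apply derivable_pt_lim_id | ring].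
  - apply derivable_pt_lim_const.
  - apply derivable_pt_lim_const.
Qed.

Lemma pwF_ok m : smooth (fun x => 0 < x) (pwF m).
Proof.
  intros k x Hx. unfold pwF. apply (dpl_scal _ _ x _ _ (derivable_pt_lim_power x (m - INR k) Hx)).
  cbn [falling]. rewrite S_INR. replace (m - (INR k + 1)) with (m - INR k - 1) by ring. ring.
Qed.

Lemma pwF_neg1 x : 0 < x -> pwF (-1) 0 x = / x.
Proof. intros Hx. unfold pwF. cbn [falling INR]. rewrite Rminus_0_r, Rpower_neg1 by auto. ring. Qed.

Lemma lnF_ok : smooth (fun x => 0 < x) lnF.
Proof.
  intros [|k] x Hx; [|apply pwF_ok; auto]. cbn [lnF]. rewrite pwF_neg1 by auto.
  apply (dpl_plus _ _ x 0 (/ x)); [apply derivable_pt_lim_const| apply derivable_pt_lim_ln; auto| ring].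
Qed.

Lemma rlnF_ok : smooth (fun x => 0 < x) rlnF.
Proof.
  intros [|k] x Hx.
  - apply (dpl_mult (fun y => y) ln x 1 (/ x)); [apply derivable_pt_lim_id| apply derivable_pt_lim_ln; auto|].
    cbn [rlnF]. field. lra.
  - apply (lnF_ok k x Hx).
Qed.

Definition indep (i : nat) (F : fn3) : Prop :=
  forall t r u, 0 < r -> 0 < u ->
    match i with O => F t r u = F 0 r u | S O => F t r u = F t 1 u | _ => F t r u = F t r 1 end.

Lemma indep_of_pd0 i F G : (i < 3)%nat -> pd i F G ->
  (forall t r u, 0 < r -> 0 < u -> G t r u = 0) -> indep i F.
Proof.
  intros Hi HF HG t r u Hr Hu. destruct i as [|[|[|i]]]; try lia.
  - apply (const_all (fun s => F s r u)). intro s. rewrite <- (HG s r u) by auto. apply HF; auto.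
  - apply (const_pos (fun s => F t s u)); [|lra|lra]. intros s Hs.
    rewrite <- (HG t s u) by auto. apply HF; auto.
  - apply (const_pos (fun s => F t r s)); [|lra|lra]. intros s Hs.
    rewrite <- (HG t r s) by auto. apply HF; auto.
Qed.

Lemma indep_pd0 i F G : indep i F -> pd i F G -> forall t r u, 0 < r -> 0 < u -> G t r u = 0.
Proof.
  intros HI HF t r u Hr Hu. specialize (HF t r u Hr Hu).
  destruct i as [|[|i]].
  - exact (deriv_const_all _ t _ (F 0 r u) (fun s => HI s r u Hr Hu) HF).
  - exact (deriv_const_pos _ r _ (F t 1 u) (fun s Hs => HI t s u Hs Hu) Hr HF).
  - exact (deriv_const_pos _ u _ (F t r 1) (fun s Hs => HI t r s Hr Hs) Hu HF).
Qed.

Lemma indep_pd i j F G : (i < 3)%nat -> (j < 3)%nat -> indep i F -> pd j F G -> indep i G.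
Proof.
  intros Hi Hj HI HF.
  destruct (Nat.eq_dec i j) as [<-|Hij].
  { pose proof (indep_pd0 i F G HI HF) as G0. intros t r u Hr Hu.
    destruct i as [|[|i]]; rewrite !G0 by (auto; lra); reflexivity. }
  assert (H1 : 0 < 1) by lra.
  intros t r u Hr Hu.
  destruct i as [|[|[|i]]]; destruct j as [|[|[|j]]]; try lia; cbv beta iota.
  - exact (deriv_unique_pos _ _ r _ _ (fun s Hs => HI t s u Hs Hu) Hr (HF t r u Hr Hu) (HF 0 r u Hr Hu)).
  - exact (deriv_unique_pos _ _ u _ _ (fun s Hs => HI t r s Hr Hs) Hu (HF t r u Hr Hu) (HF 0 r u Hr Hu)).
  - exact (deriv_unique_all _ _ t _ _ (fun s => HI s r u Hr Hu) (HF t r u Hr Hu) (HF t 1 u H1 Hu)).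
  - exact (deriv_unique_pos _ _ u _ _ (fun s Hs => HI t r s Hr Hs) Hu (HF t r u Hr Hu) (HF t 1 u H1 Hu)).
  - exact (deriv_unique_all _ _ t _ _ (fun s => HI s r u Hr Hu) (HF t r u Hr Hu) (HF t r 1 Hr H1)).
  - exact (deriv_unique_pos _ _ r _ _ (fun s Hs => HI t s u Hs Hu) Hr (HF t r u Hr Hu) (HF t r 1 Hr H1)).
Qed.

Lemma fam_indep_next D l i j : fam_ok D -> (i < 3)%nat -> (j < 3)%nat ->
  indep i (D l) -> indep i (D (j :: l)).
Proof. intros HD Hi Hj HI. exact (indep_pd i j _ _ Hi Hj HI (HD l j Hj)). Qed.

Lemma fam_indep_zero D l i : fam_ok D -> (i < 3)%nat -> indep i (D l) ->
  forall t r u, 0 < r -> 0 < u -> D (i :: l) t r u = 0.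
Proof. intros HD Hi HI. exact (indep_pd0 i _ _ HI (HD l i Hi)). Qed.

(* F is affine in u:  F = a(t, r) u + b(t, r)  with a the value of G at u = 1;
   in families, G is the member giving the u-derivative of F. *)
Definition affine_u (F G : fn3) : Prop :=
  forall t r u, 0 < r -> 0 < u -> F t r u = G t r 1 * u + (F t r 1 - G t r 1).

Lemma affine_u_intro F G : pd 2 F G -> indep 2 G -> affine_u F G.
Proof.
  intros HF HG t r u Hr Hu.
  assert (K : F t r u - G t r 1 * u = F t r 1 - G t r 1 * 1).
  { apply (const_pos (fun s => F t r s - G t r 1 * s)); [|lra|lra]. intros s Hs.
    apply (dpl_minus _ _ s (G t r s) (G t r 1)); [apply HF; auto| |rewrite (HG t r s) by auto; ring].
    apply (dpl_scal (fun y => y) _ s 1); [apply derivable_pt_lim_id| ring]. }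
  lra.
Qed.

Lemma affine_u_pd i F G F' G' : (i < 2)%nat -> affine_u F G -> pd i F F' -> pd i G G' ->
  affine_u F' G'.
Proof.
  intros Hi HA HF HG t r u Hr Hu. assert (H1 : 0 < 1) by lra.
  destruct i as [|[|i]]; try lia.
  - apply (deriv_unique_all (fun s => F s r u) (fun s => G s r 1 * u + (F s r 1 - G s r 1)) t);
      [intro s; apply HA; auto| apply HF; auto|].
    apply (dpl_plus _ _ t (G' t r 1 * u) (F' t r 1 - G' t r 1)); [|apply dpl_minus with (l1 := F' t r 1) (l2 := G' t r 1)|ring].
    + apply (dpl_mulc (fun s => G s r 1) _ t (G' t r 1)); [apply HG; auto| ring].
    + apply HF; auto.
    + apply HG; auto.
    + ring.
  - apply (deriv_unique_pos (fun s => F t s u) (fun s => G t s 1 * u + (F t s 1 - G t s 1)) r);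
      [intros s Hs; apply HA; auto| auto| apply HF; auto|].
    apply (dpl_plus _ _ r (G' t r 1 * u) (F' t r 1 - G' t r 1)); [|apply dpl_minus with (l1 := F' t r 1) (l2 := G' t r 1)|ring].
    + apply (dpl_mulc (fun s => G t s 1) _ r (G' t r 1)); [apply HG; auto| ring].
    + apply HF; auto.
    + apply HG; auto.
    + ring.
Qed.

Lemma affine_u_slope F G G2 : affine_u F G -> pd 2 F G2 ->
  forall t r u, 0 < r -> 0 < u -> G2 t r u = G t r 1.
Proof.
  intros HA HF t r u Hr Hu.
  apply (deriv_unique_pos (fun s => F t r s) (fun s => G t r 1 * s + (F t r 1 - G t r 1)) u);
    [intros s Hs; apply HA; auto| auto| apply HF; auto|].
  apply (dpl_plus _ _ u (G t r 1) 0); [|apply derivable_pt_lim_const| ring].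
  apply (dpl_scal (fun y => y) _ u 1); [apply derivable_pt_lim_id| ring].
Qed.

Definition zeroD : list nat -> fn3 := prodD (cstF 0) (cstF 1) (cstF 1).
Definition famX1 (k : nat) : list nat -> fn3 :=
  match k with O => prodD (cstF 1) (cstF 1) (cstF 1) | _ => zeroD end.
Definition famX2 (k : nat) : list nat -> fn3 :=
  match k with O => prodD (linF 0 1) (cstF 1) (cstF 1)
  | S O => prodD (cstF 1) (linF 0 1) (cstF 1) | _ => zeroD end.
Definition famX3 (b c p : R) (k : nat) : list nat -> fn3 :=
  match k with O => zeroD
  | S O => prodD (cstF 1) (linF 0 (/ 2 * p * b)) (cstF 1)
  | _ => prodD (cstF 1) (cstF 1) (linF (p * c) b) end.
Definition famX4 (a b c p n : R) (k : nat) : list nat -> fn3 :=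
  match k with O => zeroD
  | S O => prodD (cstF 1) (pwF (3 - n)) (cstF (a + b + (1 - p) * c))
  | _ => prodD (cstF 1) (pwF (2 - n))
           (linF ((2 - n) * (p * c)) ((2 - n) * (b + (1 - p) * c))) end.
Definition famX5 (b c p : R) (k : nat) : list nat -> fn3 :=
  match k with O => zeroD
  | S O => prodD (cstF 1) rlnF (cstF (/ 2 * p * b))
  | _ => prodD (cstF 1) lnF (linF (p * c) b) end.
Definition famX6 (k : nat) : list nat -> fn3 :=
  match k with O => prodD sqF (cstF 1) (cstF 1)
  | S O => zeroD | _ => prodD (linF 0 1) (cstF 1) (linF 0 1) end.

Ltac fam_ok_tac :=
  intros [|[|k]]; apply prodD_ok;
  first [apply cstF_ok | apply linF_ok | apply sqF_ok | apply pwF_ok | apply lnF_ok | apply rlnF_ok].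

Lemma famX1_ok k : fam_ok (famX1 k). Proof. revert k; fam_ok_tac. Qed.
Lemma famX2_ok k : fam_ok (famX2 k). Proof. revert k; fam_ok_tac. Qed.
Lemma famX3_ok b c p k : fam_ok (famX3 b c p k). Proof. revert k; fam_ok_tac. Qed.
Lemma famX4_ok a b c p n k : fam_ok (famX4 a b c p n k). Proof. revert k; fam_ok_tac. Qed.
Lemma famX5_ok b c p k : fam_ok (famX5 b c p k). Proof. revert k; fam_ok_tac. Qed.
Lemma famX6_ok k : fam_ok (famX6 k). Proof. revert k; fam_ok_tac. Qed.

Ltac fam_unfold r :=
  unfold famX1, famX2, famX3, famX4, famX5, famX6, zeroD, prodD;
  cbn [cnt Nat.eqb cstF linF sqF lnF rlnF];
  try (unfold pwF; rewrite !(Rpower_minus_nat r) by auto; cbn [falling INR pow]).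

Ltac fam_head_tac :=
  intros; match goal with Hk : (?k < 3)%nat, Hr : 0 < ?r |- _ =>
    destruct k as [|[|[|k]]]; try lia; simpl; fam_unfold r; field end.

Lemma famX1_head k t r u : 0 < r -> 0 < u -> (k < 3)%nat -> famX1 k nil t r u = Defs.comp X1 k t r u.
Proof. fam_head_tac. Qed.
Lemma famX2_head k t r u : 0 < r -> 0 < u -> (k < 3)%nat -> famX2 k nil t r u = Defs.comp X2 k t r u.
Proof. fam_head_tac. Qed.
Lemma famX3_head b c p k t r u : 0 < r -> 0 < u -> (k < 3)%nat ->
  famX3 b c p k nil t r u = Defs.comp (X3 b c p) k t r u.
Proof. fam_head_tac. Qed.
Lemma famX4_head a b c p n k t r u : 0 < r -> 0 < u -> (k < 3)%nat ->
  famX4 a b c p n k nil t r u = Defs.comp (X4 a b c p n) k t r u.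
Proof. fam_head_tac. Qed.
Lemma famX5_head b c p k t r u : 0 < r -> 0 < u -> (k < 3)%nat ->
  famX5 b c p k nil t r u = Defs.comp (X5 b c p) k t r u.
Proof. fam_head_tac. Qed.
Lemma famX6_head k t r u : 0 < r -> 0 < u -> (k < 3)%nat -> famX6 k nil t r u = Defs.comp X6 k t r u.
Proof. fam_head_tac. Qed.

Lemma residual_congr a b c p n Dt Dx De Et Ex Ee t r u ut ur utr urr :
  (forall l, Dt l t r u = Et l t r u) -> (forall l, Dx l t r u = Ex l t r u) ->
  (forall l, De l t r u = Ee l t r u) ->
  prolong_residual a b c p n Dt Dx De t r u ut ur utr urr =
  prolong_residual a b c p n Et Ex Ee t r u ut ur utr urr.
Proof. intros H1 H2 H3. unfold prolong_residual. rewrite !H1, !H2, !H3. reflexivity. Qed.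

Lemma residual_add a b c p n D1 D2 D3 E1 E2 E3 t r u ut ur utr urr :
  prolong_residual a b c p n (addD D1 E1) (addD D2 E2) (addD D3 E3) t r u ut ur utr urr =
  prolong_residual a b c p n D1 D2 D3 t r u ut ur utr urr +
  prolong_residual a b c p n E1 E2 E3 t r u ut ur utr urr.
Proof. unfold prolong_residual, addD. ring. Qed.

Lemma residual_scale a b c p n k D1 D2 D3 t r u ut ur utr urr :
  prolong_residual a b c p n (sclD k D1) (sclD k D2) (sclD k D3) t r u ut ur utr urr =
  k * prolong_residual a b c p n D1 D2 D3 t r u ut ur utr urr.
Proof. unfold prolong_residual, sclD. ring. Qed.

Ltac residual_unfold r u :=
  unfold prolong_residual; fam_unfold r; rewrite ?Rpower_minus1, ?Rpower_minus2 by auto.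

Lemma X1_residual a b c p n t r u ut ur utr urr : 0 < r -> 0 < u ->
  prolong_residual a b c p n (famX1 0) (famX1 1) (famX1 2) t r u ut ur utr urr = 0.
Proof. intros. residual_unfold r u. ring. Qed.

Lemma X2_residual a b c p n t r u ut ur utr urr : 0 < r -> 0 < u ->
  prolong_residual a b c p n (famX2 0) (famX2 1) (famX2 2) t r u ut ur utr urr = 0.
Proof. intros. residual_unfold r u. field. lra. Qed.

Lemma X3_residual a b c p n t r u ut ur utr urr : 0 < r -> 0 < u -> cond3 c p ->
  prolong_residual a b c p n (famX3 b c p 0) (famX3 b c p 1) (famX3 b c p 2) t r u ut ur utr urr = 0.
Proof.
  intros Hr Hu Hc. residual_unfold r u. destruct (Rmult_integral _ _ Hc) as [->|Hp].
  - field. lra.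
  - replace p with 1 by lra. rewrite Rpower_1 by auto. field. lra.
Qed.

Lemma X4_residual a b c p n t r u ut ur utr urr : 0 < r -> 0 < u -> b <> 0 -> p <> 0 ->
  cond4 a b c p n ->
  prolong_residual a b c p n (famX4 a b c p n 0) (famX4 a b c p n 1) (famX4 a b c p n 2)
    t r u ut ur utr urr = 0.
Proof.
  intros Hr Hu Hb Hp [Hc [Hn Hrel]]. residual_unfold r u.
  replace (3 - n) with ((2 - n) + 1) by ring. rewrite Rpower_plus, Rpower_1 by auto.
  assert (Hn3 : n - 3 <> 0).
  { intro E. replace n with 3 in Hrel by lra.
    assert (E' : b * p = 0) by lra. destruct (Rmult_integral _ _ E'); lra. }
  assert (Q : 0 < Rpower r (2 - n)) by apply exp_pos.
  destruct (Rmult_integral _ _ Hc) as [->|Hp1].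
  - replace a with (b * p * (n / 2 - 1) / (n - 3) - b) by (field_simplify_eq; lra).
    field. repeat split; lra.
  - replace p with 1 in * by lra. rewrite Rpower_1 by auto.
    replace a with (b * (n / 2 - 1) / (n - 3) - b) by (field_simplify_eq; lra).
    field. repeat split; lra.
Qed.

Lemma X5_residual a b c p n t r u ut ur utr urr : 0 < r -> 0 < u -> cond5 a b c p n ->
  prolong_residual a b c p n (famX5 b c p 0) (famX5 b c p 1) (famX5 b c p 2) t r u ut ur utr urr = 0.
Proof.
  intros Hr Hu [Hc [-> ->]]. residual_unfold r u. rewrite Rpower_neg1 by auto.
  destruct (Rmult_integral _ _ Hc) as [->|Hp1].
  - field. lra.
  - replace p with 1 by lra. rewrite Rpower_1 by auto. field. lra.
Qed.

Lemma X6_residual a b c p n t r u ut ur utr urr : 0 < r -> 0 < u -> cond6 c p ->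
  prolong_residual a b c p n (famX6 0) (famX6 1) (famX6 2) t r u ut ur utr urr = 0.
Proof. intros Hr Hu [-> ->]. residual_unfold r u. field. lra. Qed.

Definition comb (a b c p n k1 k2 k3 k4 k5 k6 : R) : VF :=
  vf_add (vf_scale k1 X1) (vf_add (vf_scale k2 X2)
    (vf_add (vf_scale k3 (X3 b c p)) (vf_add (vf_scale k4 (X4 a b c p n))
    (vf_add (vf_scale k5 (X5 b c p)) (vf_scale k6 X6))))).

Definition famComb a b c p n (k1 k2 k3 k4 k5 k6 : R) (j : nat) : list nat -> fn3 :=
  addD (sclD k1 (famX1 j)) (addD (sclD k2 (famX2 j)) (addD (sclD k3 (famX3 b c p j))
    (addD (sclD k4 (famX4 a b c p n j)) (addD (sclD k5 (famX5 b c p j)) (sclD k6 (famX6 j)))))).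

Lemma famComb_ok a b c p n k1 k2 k3 k4 k5 k6 j : fam_ok (famComb a b c p n k1 k2 k3 k4 k5 k6 j).
Proof.
  unfold famComb. repeat apply addD_ok; apply sclD_ok;
  first [apply famX1_ok | apply famX2_ok | apply famX3_ok | apply famX4_ok | apply famX5_ok | apply famX6_ok].
Qed.

Lemma famComb_head a b c p n k1 k2 k3 k4 k5 k6 j t r u : 0 < r -> 0 < u -> (j < 3)%nat ->
  famComb a b c p n k1 k2 k3 k4 k5 k6 j nil t r u =
  Defs.comp (comb a b c p n k1 k2 k3 k4 k5 k6) j t r u.
Proof.
  intros Hr Hu Hj. unfold famComb, addD, sclD.
  rewrite famX1_head, famX2_head, famX3_head, famX4_head, famX5_head, famX6_head by auto.
  destruct j as [|[|[|j]]]; try lia; reflexivity.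
Qed.

Lemma guarded_term (P : Prop) k res : (~ P -> k = 0) -> (P -> res = 0) -> k * res = 0.
Proof. intros Hk Hr. destruct (classic P) as [H|H]; [rewrite Hr by exact H| rewrite Hk by exact H]; ring. Qed.

Lemma comb_symmetry a b c p n (hb : b <> 0) (hp : p <> 0) X k1 k2 k3 k4 k5 k6 :
  (~ cond3 c p -> k3 = 0) -> (~ cond4 a b c p n -> k4 = 0) ->
  (~ cond5 a b c p n -> k5 = 0) -> (~ cond6 c p -> k6 = 0) ->
  vf_eq X (comb a b c p n k1 k2 k3 k4 k5 k6) -> point_symmetry a b c p n X.
Proof.
  intros C3 C4 C5 C6 HX.
  set (F := famComb a b c p n k1 k2 k3 k4 k5 k6).
  assert (Hhead : forall j, (j < 3)%nat -> forall t r u, 0 < r -> 0 < u ->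
                    Defs.comp X j t r u = F j nil t r u).
  { intros j Hj t r u Hr Hu. unfold F. rewrite famComb_head by auto.
    destruct (HX t r u Hr Hu) as [E0 [E1 E2]].
    destruct j as [|[|[|j]]]; try lia; assumption. }
  exists (with_head (vt X) (F 0%nat)), (with_head (vr X) (F 1%nat)), (with_head (vu X) (F 2%nat)).
  split; [apply with_head_derivs; [apply famComb_ok| exact (Hhead 0%nat ltac:(lia))]|].
  split; [apply with_head_derivs; [apply famComb_ok| exact (Hhead 1%nat ltac:(lia))]|].
  split; [apply with_head_derivs; [apply famComb_ok| exact (Hhead 2%nat ltac:(lia))]|].
  intros t r u ut ur utr urr Hr Hu.
  rewrite residual_congr with (Et := F 0%nat) (Ex := F 1%nat) (Ee := F 2%nat).
  2: intros [|x l]; [exact (Hhead 0%nat ltac:(lia) t r u Hr Hu)| reflexivity].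
  2: intros [|x l]; [exact (Hhead 1%nat ltac:(lia) t r u Hr Hu)| reflexivity].
  2: intros [|x l]; [exact (Hhead 2%nat ltac:(lia) t r u Hr Hu)| reflexivity].
  unfold F, famComb. rewrite !residual_add, !residual_scale, X1_residual, X2_residual by auto.
  rewrite (guarded_term _ k3 _ C3), (guarded_term _ k4 _ C4), (guarded_term _ k5 _ C5),
    (guarded_term _ k6 _ C6); [ring| intros; apply X6_residual| intros; apply X5_residual
    | intros; apply X4_residual| intros; apply X3_residual]; auto.
Qed.

Lemma bracket_of (FX FY : nat -> list nat -> fn3) X Y Z :
  (forall k, fam_ok (FX k)) -> (forall k, fam_ok (FY k)) ->
  (forall k t r u, 0 < r -> 0 < u -> (k < 3)%nat -> FX k nil t r u = Defs.comp X k t r u) ->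
  (forall k t r u, 0 < r -> 0 < u -> (k < 3)%nat -> FY k nil t r u = Defs.comp Y k t r u) ->
  (forall t r u, 0 < r -> 0 < u -> forall k, (k < 3)%nat ->
      Defs.comp Z k t r u =
        (Defs.comp X 0 t r u * FY k [0%nat] t r u - Defs.comp Y 0 t r u * FX k [0%nat] t r u)
      + (Defs.comp X 1 t r u * FY k [1%nat] t r u - Defs.comp Y 1 t r u * FX k [1%nat] t r u)
      + (Defs.comp X 2 t r u * FY k [2%nat] t r u - Defs.comp Y 2 t r u * FX k [2%nat] t r u)) ->
  is_bracket X Y Z.
Proof.
  intros OX OY NX NY HZ. exists (fun k j => FX k [j]), (fun k j => FY k [j]). split; [|exact HZ].
  intros k j Hk Hj. split.
  - apply pd_ext with (G := FX k nil); [intros; symmetry; apply NX; auto| apply OX; auto].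
  - apply pd_ext with (G := FY k nil); [intros; symmetry; apply NY; auto| apply OY; auto].
Qed.

Ltac bracket_tac fx fy :=
  apply bracket_of with (FX := fx) (FY := fy);
  [ intro; first [apply famX1_ok | apply famX2_ok | apply famX3_ok | apply famX4_ok
                  | apply famX5_ok | apply famX6_ok]
  | intro; first [apply famX1_ok | apply famX2_ok | apply famX3_ok | apply famX4_ok
                  | apply famX5_ok | apply famX6_ok]
  | intros; first [apply famX1_head | apply famX2_head | apply famX3_head | apply famX4_head
                   | apply famX5_head | apply famX6_head]; auto
  | intros; first [apply famX1_head | apply famX2_head | apply famX3_head | apply famX4_head
                   | apply famX5_head | apply famX6_head]; auto
  | intros t r u Hr Hu k Hk; destruct k as [|[|[|k]]]; try lia; fam_unfold r;
    cbn [Defs.comp X1 X2 X3 X4 X5 X6 vf_zero vf_add vf_scale vt vr vu];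
    rewrite ?Rpower_neg1 by auto;
    try match goal with |- context [Rpower r (3 - ?m)] =>
      replace (3 - m) with ((2 - m) + 1) by ring; rewrite Rpower_plus, Rpower_1 by auto end ].

Lemma bracket12 : is_bracket X1 X2 X1.
Proof. bracket_tac famX1 famX2; ring. Qed.
Lemma bracket13 b c p : is_bracket X1 (X3 b c p) vf_zero.
Proof. bracket_tac famX1 (famX3 b c p); ring. Qed.
Lemma bracket23 b c p : is_bracket X2 (X3 b c p) vf_zero.
Proof. bracket_tac famX2 (famX3 b c p); ring. Qed.
Lemma bracket14 a b c p n : is_bracket X1 (X4 a b c p n) vf_zero.
Proof. bracket_tac famX1 (famX4 a b c p n); ring. Qed.
Lemma bracket24 a b c p n : is_bracket X2 (X4 a b c p n) (vf_scale (2 - n) (X4 a b c p n)).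
Proof. bracket_tac famX2 (famX4 a b c p n); field; lra. Qed.
Lemma bracket34 a b c p n : cond3 c p ->
  is_bracket (X3 b c p) (X4 a b c p n) (vf_scale (p * (1 - n / 2) * b) (X4 a b c p n)).
Proof.
  intros Hc. bracket_tac (famX3 b c p) (famX4 a b c p n);
  destruct (Rmult_integral _ _ Hc) as [->|Hp]; try replace p with 1 by lra; field; lra.
Qed.
Lemma bracket15 b c p : is_bracket X1 (X5 b c p) vf_zero.
Proof. bracket_tac famX1 (famX5 b c p); ring. Qed.
Lemma bracket25 b c p : is_bracket X2 (X5 b c p) (X3 b c p).
Proof. bracket_tac famX2 (famX5 b c p); field; lra. Qed.
Lemma bracket35 b c p : is_bracket (X3 b c p) (X5 b c p) (vf_scale (p * b / 2) (X3 b c p)).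
Proof. bracket_tac (famX3 b c p) (famX5 b c p); field; lra. Qed.
Lemma bracket16 b c p : b <> 0 -> cond6 c p ->
  is_bracket X1 X6 (vf_add (vf_scale 2 X2) (vf_scale (1 / b) (X3 b c p))).
Proof. intros Hb [-> ->]. bracket_tac famX1 famX6; field; auto. Qed.
Lemma bracket26 : is_bracket X2 X6 X6.
Proof. bracket_tac famX2 famX6; ring. Qed.
Lemma bracket36 b c p : c = 0 -> is_bracket (X3 b c p) X6 vf_zero.
Proof. intros ->. bracket_tac (famX3 b 0 p) famX6; ring. Qed.
Lemma bracket46 a b c p n : c = 0 -> is_bracket (X4 a b c p n) X6 vf_zero.
Proof. intros ->. bracket_tac (famX4 a b 0 p n) famX6; field; lra. Qed.
Lemma bracket56 b c p : c = 0 -> is_bracket (X5 b c p) X6 vf_zero.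
Proof. intros ->. bracket_tac (famX5 b 0 p) famX6; ring. Qed.

Lemma indep_t_only F : indep 1 F -> indep 2 F ->
  forall t r u, 0 < r -> 0 < u -> F t r u = F t 1 1.
Proof. intros H1 H2 t r u Hr Hu. rewrite (H2 t r u), (H1 t r 1) by lra. reflexivity. Qed.

Lemma indep_r_only F : indep 0 F -> indep 2 F ->
  forall t r u, 0 < r -> 0 < u -> F t r u = F 0 r 1.
Proof. intros H0 H2 t r u Hr Hu. rewrite (H2 t r u), (H0 t r 1) by lra. reflexivity. Qed.

Lemma Rpower_pred_mul u m : 0 < u -> Rpower u m = u * Rpower u (m - 1).
Proof. intros Hu. rewrite Rpower_minus1 by auto. field. lra. Qed.

(* Coefficients of u_t u_tr, u_r u_tr and u_tr in the determining equation:
   xi_u = 0, (c + b u^p) tau_u = 0 and xi_t = (c + b u^p) tau_r. *)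
Lemma residual_jet_coefficients a b c p n Dt Dx De t r u :
  (forall ut ur utr urr, prolong_residual a b c p n Dt Dx De t r u ut ur utr urr = 0) ->
  Dx [2%nat] t r u = 0 /\ (c + b * Rpower u p) * Dt [2%nat] t r u = 0 /\
  Dx [0%nat] t r u = (c + b * Rpower u p) * Dt [1%nat] t r u.
Proof.
  intros H.
  pose proof (H 0 0 0 0) as H1. pose proof (H 0 0 1 0) as H2.
  pose proof (H 1 0 0 0) as H3. pose proof (H 1 0 1 0) as H4.
  pose proof (H 0 1 0 0) as H5. pose proof (H 0 1 1 0) as H6.
  unfold prolong_residual in *. cbv zeta in *. lra.
Qed.

(* The reduced determining system for  tau = th(t), xi = xh(r), eta = A u + B. *)
Definition reduced_form (a b c p n : R) (th t1 t2 xh x1 x2 x3 : R -> R) (A B : R -> R -> R) : Prop :=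
  (forall t, derivable_pt_lim th t (t1 t) /\ derivable_pt_lim t1 t (t2 t) /\ t2 t = t2 0) /\
  t2 0 * (p + 4) = 0 /\
  (forall r, 0 < r -> derivable_pt_lim xh r (x1 r) /\ derivable_pt_lim x1 r (x2 r) /\
     derivable_pt_lim x2 r (x3 r) /\ x3 r + (n - 1) / r * x2 r = 0) /\
  (forall t r, 0 < r -> p * A t r = 2 * x1 r - 2 * t1 t) /\
  (forall t r, 0 < r -> (p <> 1 -> B t r = 0 /\ c * (2 * x1 r - 2 * t1 t) = 0) /\
                        (p = 1 -> c * (2 * x1 r - 2 * t1 t) = b * B t r)) /\
  (forall r, 0 < r ->
     b * (x2 r - (n - 1) / r * x1 r + (n - 1) / r ^ 2 * xh r - 4 * x2 r / p) = 4 * a * x2 r / p).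

Section DeterminingEquations.

Variables a b c p n : R.
Hypotheses (hp : p <> 0) (hb : b <> 0).
Variables Dt Dx De : list nat -> fn3.
Hypotheses (HDt : fam_ok Dt) (HDx : fam_ok Dx) (HDe : fam_ok De).
Hypothesis Hres : forall t r u ut ur utr urr, 0 < r -> 0 < u ->
  prolong_residual a b c p n Dt Dx De t r u ut ur utr urr = 0.

Lemma jet_coefficients t r u : 0 < r -> 0 < u ->
  Dx [2%nat] t r u = 0 /\ (c + b * Rpower u p) * Dt [2%nat] t r u = 0 /\
  Dx [0%nat] t r u = (c + b * Rpower u p) * Dt [1%nat] t r u.
Proof. intros Hr Hu. apply (residual_jet_coefficients a b c p n Dt Dx De). intros; apply Hres; auto. Qed.

Lemma tau_u t r u : 0 < r -> 0 < u -> Dt [2%nat] t r u = 0.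
Proof.
  intros Hr Hu. apply (factor_cancel c b p (fun s => Dt [2%nat] t r s)); auto.
  - intros v Hv. apply jet_coefficients; auto.
  - intros v Hv. apply derivable_continuous_pt. exists (Dt [2%nat; 2%nat] t r v). apply fam_dU; auto.
Qed.

Lemma xi_u t r u : 0 < r -> 0 < u -> Dx [2%nat] t r u = 0.
Proof. intros Hr Hu. apply jet_coefficients; auto. Qed.

Lemma tau_indep_u : indep 2 (Dt nil).
Proof. apply (indep_of_pd0 2%nat _ (Dt [2%nat])); auto. exact tau_u. Qed.

Lemma xi_indep_u : indep 2 (Dx nil).
Proof. apply (indep_of_pd0 2%nat _ (Dx [2%nat])); auto. exact xi_u. Qed.

(* tau_r = xi_t = 0: both are u-independent, while xi_t = (c + b u^p) tau_r
   with a factor that is not constant in u. *)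
Lemma tau_r_xi_t t r u : 0 < r -> 0 < u -> Dt [1%nat] t r u = 0 /\ Dx [0%nat] t r u = 0.
Proof.
  intros Hr Hu.
  pose proof (indep_pd 2%nat 1%nat _ _ ltac:(lia) ltac:(lia) tau_indep_u (HDt nil 1%nat ltac:(lia))) as It.
  pose proof (indep_pd 2%nat 0%nat _ _ ltac:(lia) ltac:(lia) xi_indep_u (HDx nil 0%nat ltac:(lia))) as Ix.
  destruct (jet_coefficients t r 1 Hr ltac:(lra)) as [_ [_ E1]].
  destruct (jet_coefficients t r 2 Hr ltac:(lra)) as [_ [_ E2]].
  rewrite (It t r 2), (Ix t r 2) in E2 by lra. rewrite Rpower_one_base in E1.
  assert (Hne : b * (1 - Rpower 2 p) <> 0).
  { apply Rmult_integral_contrapositive; split; auto. pose proof (Rpower_ne1 2 p). lra. }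
  assert (K : b * (1 - Rpower 2 p) * Dt [1%nat] t r 1 = 0) by lra.
  destruct (Rmult_integral _ _ K) as [K1|K1]; [contradiction|].
  rewrite (It t r u), (Ix t r u) by auto. split; [exact K1|]. rewrite E1, K1. ring.
Qed.

Lemma tau_r t r u : 0 < r -> 0 < u -> Dt [1%nat] t r u = 0.
Proof. intros; apply tau_r_xi_t; auto. Qed.

Lemma xi_t t r u : 0 < r -> 0 < u -> Dx [0%nat] t r u = 0.
Proof. intros; apply tau_r_xi_t; auto. Qed.

Lemma tau_indep_r : indep 1 (Dt nil).
Proof. apply (indep_of_pd0 1%nat _ (Dt [1%nat])); auto. exact tau_r. Qed.

Lemma xi_indep_t : indep 0 (Dx nil).
Proof. apply (indep_of_pd0 0%nat _ (Dx [0%nat])); auto. exact xi_t. Qed.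

Definition th t := Dt nil t 1 1.
Definition t1 t := Dt [0%nat] t 1 1.
Definition t2 t := Dt [0%nat; 0%nat] t 1 1.
Definition t3 t := Dt [0%nat; 0%nat; 0%nat] t 1 1.
Definition xh r := Dx nil 0 r 1.
Definition x1 r := Dx [1%nat] 0 r 1.
Definition x2 r := Dx [1%nat; 1%nat] 0 r 1.
Definition x3 r := Dx [1%nat; 1%nat; 1%nat] 0 r 1.

Lemma tau_t_indep : indep 1 (Dt [0%nat]) /\ indep 2 (Dt [0%nat]).
Proof. split; apply fam_indep_next; auto; [exact tau_indep_r| exact tau_indep_u]. Qed.

Lemma xi_r_indep : indep 0 (Dx [1%nat]) /\ indep 2 (Dx [1%nat]).
Proof. split; apply fam_indep_next; auto; [exact xi_indep_t| exact xi_indep_u]. Qed.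

Lemma tau_val t r u : 0 < r -> 0 < u -> Dt nil t r u = th t.
Proof. apply indep_t_only; [exact tau_indep_r| exact tau_indep_u]. Qed.
Lemma tau_t t r u : 0 < r -> 0 < u -> Dt [0%nat] t r u = t1 t.
Proof. apply indep_t_only; apply tau_t_indep. Qed.
Lemma tau_tt t r u : 0 < r -> 0 < u -> Dt [0%nat; 0%nat] t r u = t2 t.
Proof. apply indep_t_only; apply fam_indep_next; auto; apply tau_t_indep. Qed.
Lemma xi_val t r u : 0 < r -> 0 < u -> Dx nil t r u = xh r.
Proof. apply indep_r_only; [exact xi_indep_t| exact xi_indep_u]. Qed.
Lemma xi_r t r u : 0 < r -> 0 < u -> Dx [1%nat] t r u = x1 r.
Proof. apply indep_r_only; apply xi_r_indep. Qed.
Lemma xi_rr t r u : 0 < r -> 0 < u -> Dx [1%nat; 1%nat] t r u = x2 r.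
Proof. apply indep_r_only; apply fam_indep_next; auto; apply xi_r_indep. Qed.

Lemma tau_ut t r u : 0 < r -> 0 < u -> Dt [2%nat; 0%nat] t r u = 0.
Proof. apply fam_indep_zero; auto. apply tau_t_indep. Qed.
Lemma tau_uu t r u : 0 < r -> 0 < u -> Dt [2%nat; 2%nat] t r u = 0.
Proof. apply fam_indep_zero, fam_indep_next; auto. exact tau_indep_u. Qed.
Lemma tau_rr t r u : 0 < r -> 0 < u -> Dt [1%nat; 1%nat] t r u = 0.
Proof. apply fam_indep_zero, fam_indep_next; auto. exact tau_indep_r. Qed.
Lemma tau_ur t r u : 0 < r -> 0 < u -> Dt [2%nat; 1%nat] t r u = 0.
Proof. apply fam_indep_zero, fam_indep_next; auto. exact tau_indep_u. Qed.
Lemma xi_tt t r u : 0 < r -> 0 < u -> Dx [0%nat; 0%nat] t r u = 0.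
Proof. apply fam_indep_zero, fam_indep_next; auto. exact xi_indep_t. Qed.
Lemma xi_ut t r u : 0 < r -> 0 < u -> Dx [2%nat; 0%nat] t r u = 0.
Proof. apply fam_indep_zero, fam_indep_next; auto. exact xi_indep_u. Qed.
Lemma xi_uu t r u : 0 < r -> 0 < u -> Dx [2%nat; 2%nat] t r u = 0.
Proof. apply fam_indep_zero, fam_indep_next; auto. exact xi_indep_u. Qed.
Lemma xi_ur t r u : 0 < r -> 0 < u -> Dx [2%nat; 1%nat] t r u = 0.
Proof. apply fam_indep_zero; auto. apply xi_r_indep. Qed.

Lemma th_deriv t : derivable_pt_lim th t (t1 t).
Proof. apply (fam_dT Dt nil t 1 1); auto; lra. Qed.
Lemma t1_deriv t : derivable_pt_lim t1 t (t2 t).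
Proof. apply (fam_dT Dt [0%nat] t 1 1); auto; lra. Qed.
Lemma t2_deriv t : derivable_pt_lim t2 t (t3 t).
Proof. apply (fam_dT Dt [0%nat; 0%nat] t 1 1); auto; lra. Qed.
Lemma xh_deriv r : 0 < r -> derivable_pt_lim xh r (x1 r).
Proof. intros; apply (fam_dR Dx nil 0 r 1); auto; lra. Qed.
Lemma x1_deriv r : 0 < r -> derivable_pt_lim x1 r (x2 r).
Proof. intros; apply (fam_dR Dx [1%nat] 0 r 1); auto; lra. Qed.
Lemma x2_deriv r : 0 < r -> derivable_pt_lim x2 r (x3 r).
Proof. intros; apply (fam_dR Dx [1%nat; 1%nat] 0 r 1); auto; lra. Qed.

Ltac tau_xi_jets H :=
  unfold prolong_residual in H; cbv zeta in H;
  rewrite ?tau_u, ?tau_r, ?xi_u, ?xi_t, ?tau_val, ?tau_t, ?tau_tt, ?xi_val, ?xi_r, ?xi_rr,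
    ?tau_ut, ?tau_uu, ?tau_rr, ?tau_ur, ?xi_tt, ?xi_ut, ?xi_uu, ?xi_ur in H by auto.

(* The coefficients of u_t^2 and u_t in the determining equation:
   eta_uu = 0 and 2 eta_ut = tau_tt. *)
Lemma eta_second_u t r u : 0 < r -> 0 < u ->
  De [2%nat; 2%nat] t r u = 0 /\ 2 * De [2%nat; 0%nat] t r u = t2 t.
Proof.
  intros Hr Hu.
  pose proof (Hres t r u 0 0 0 0 Hr Hu) as H1. pose proof (Hres t r u 1 0 0 0 Hr Hu) as H2.
  pose proof (Hres t r u (-1) 0 0 0 Hr Hu) as H3.
  tau_xi_jets H1. tau_xi_jets H2. tau_xi_jets H3. lra.
Qed.

Lemma eta_u_indep : indep 2 (De [2%nat]).
Proof. apply (indep_of_pd0 2%nat _ (De [2%nat; 2%nat])); auto. intros; apply eta_second_u; auto. Qed.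

Lemma eta_affine : affine_u (De nil) (De [2%nat]).
Proof. apply affine_u_intro; [apply HDe; lia| exact eta_u_indep]. Qed.
Lemma eta_t_affine : affine_u (De [0%nat]) (De [0%nat; 2%nat]).
Proof. apply (affine_u_pd 0%nat _ _ _ _ ltac:(lia) eta_affine); apply HDe; lia. Qed.
Lemma eta_r_affine : affine_u (De [1%nat]) (De [1%nat; 2%nat]).
Proof. apply (affine_u_pd 1%nat _ _ _ _ ltac:(lia) eta_affine); apply HDe; lia. Qed.
Lemma eta_tt_affine : affine_u (De [0%nat; 0%nat]) (De [0%nat; 0%nat; 2%nat]).
Proof. apply (affine_u_pd 0%nat _ _ _ _ ltac:(lia) eta_t_affine); apply HDe; lia. Qed.
Lemma eta_rr_affine : affine_u (De [1%nat; 1%nat]) (De [1%nat; 1%nat; 2%nat]).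
Proof. apply (affine_u_pd 1%nat _ _ _ _ ltac:(lia) eta_r_affine); apply HDe; lia. Qed.

Definition A t r := De [2%nat] t r 1.
Definition B t r := De nil t r 1 - A t r.
Definition At t r := De [0%nat; 2%nat] t r 1.
Definition Ar t r := De [1%nat; 2%nat] t r 1.
Definition Att t r := De [0%nat; 0%nat; 2%nat] t r 1.
Definition Arr t r := De [1%nat; 1%nat; 2%nat] t r 1.
Definition Bt t r := De [0%nat] t r 1 - At t r.
Definition Br t r := De [1%nat] t r 1 - Ar t r.
Definition Btt t r := De [0%nat; 0%nat] t r 1 - Att t r.
Definition Brr t r := De [1%nat; 1%nat] t r 1 - Arr t r.

Lemma eta_val t r u : 0 < r -> 0 < u -> De nil t r u = A t r * u + B t r.
Proof. intros; apply eta_affine; auto. Qed.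
Lemma eta_t t r u : 0 < r -> 0 < u -> De [0%nat] t r u = At t r * u + Bt t r.
Proof. intros; apply eta_t_affine; auto. Qed.
Lemma eta_r t r u : 0 < r -> 0 < u -> De [1%nat] t r u = Ar t r * u + Br t r.
Proof. intros; apply eta_r_affine; auto. Qed.
Lemma eta_tt t r u : 0 < r -> 0 < u -> De [0%nat; 0%nat] t r u = Att t r * u + Btt t r.
Proof. intros; apply eta_tt_affine; auto. Qed.
Lemma eta_rr t r u : 0 < r -> 0 < u -> De [1%nat; 1%nat] t r u = Arr t r * u + Brr t r.
Proof. intros; apply eta_rr_affine; auto. Qed.
Lemma eta_u t r u : 0 < r -> 0 < u -> De [2%nat] t r u = A t r.
Proof. intros; apply eta_u_indep; auto. Qed.
Lemma eta_ut t r u : 0 < r -> 0 < u -> De [2%nat; 0%nat] t r u = At t r.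
Proof. apply (affine_u_slope _ _ _ eta_t_affine); apply HDe; lia. Qed.
Lemma eta_ur t r u : 0 < r -> 0 < u -> De [2%nat; 1%nat] t r u = Ar t r.
Proof. apply (affine_u_slope _ _ _ eta_r_affine); apply HDe; lia. Qed.
Lemma eta_uu t r u : 0 < r -> 0 < u -> De [2%nat; 2%nat] t r u = 0.
Proof. intros; apply eta_second_u; auto. Qed.

Lemma At_tau t r : 0 < r -> 2 * At t r = t2 t.
Proof. intros Hr. rewrite <- (eta_ut t r 1) by lra. apply eta_second_u; auto; lra. Qed.

Lemma A_dt t r : 0 < r -> derivable_pt_lim (fun s => A s r) t (At t r).
Proof. intros; apply (fam_dT De [2%nat] t r 1); auto; lra. Qed.
Lemma At_dt t r : 0 < r -> derivable_pt_lim (fun s => At s r) t (Att t r).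
Proof. intros; apply (fam_dT De [0%nat; 2%nat] t r 1); auto; lra. Qed.
Lemma A_dr t r : 0 < r -> derivable_pt_lim (fun s => A t s) r (Ar t r).
Proof. intros; apply (fam_dR De [2%nat] t r 1); auto; lra. Qed.
Lemma Ar_dr t r : 0 < r -> derivable_pt_lim (fun s => Ar t s) r (Arr t r).
Proof. intros; apply (fam_dR De [1%nat; 2%nat] t r 1); auto; lra. Qed.
Lemma B_dt t r : 0 < r -> derivable_pt_lim (fun s => B s r) t (Bt t r).
Proof. intros; apply dpl_minus with (l1 := De [0%nat] t r 1) (l2 := At t r); [apply fam_dT| apply A_dt| ]; auto; lra. Qed.
Lemma Bt_dt t r : 0 < r -> derivable_pt_lim (fun s => Bt s r) t (Btt t r).
Proof. intros; apply dpl_minus with (l1 := De [0%nat; 0%nat] t r 1) (l2 := Att t r); [apply fam_dT| apply At_dt| ]; auto; lra. Qed.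
Lemma B_dr t r : 0 < r -> derivable_pt_lim (fun s => B t s) r (Br t r).
Proof. intros; apply dpl_minus with (l1 := De [1%nat] t r 1) (l2 := Ar t r); [apply fam_dR| apply A_dr| ]; auto; lra. Qed.
Lemma Br_dr t r : 0 < r -> derivable_pt_lim (fun s => Br t s) r (Brr t r).
Proof. intros; apply dpl_minus with (l1 := De [1%nat; 1%nat] t r 1) (l2 := Arr t r); [apply fam_dR| apply Ar_dr| ]; auto; lra. Qed.

(* The remaining determining equations: coefficients of 1, u_r (after the
   previous ones) and of u_rr. *)
Lemma determining_system t r u : 0 < r -> 0 < u ->
  (A t r - 2 * t1 t) * (c + b * Rpower u p) - b * p * Rpower u (p - 1) * (A t r * u + B t r)
    - (c + b * Rpower u p) * (A t r - 2 * x1 r) = 0 /\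
  (A t r - 2 * t1 t) * (c + b * Rpower u p) * ((n - 1) / r)
    - b * p * Rpower u (p - 1) * (A t r * u + B t r) * ((n - 1) / r)
    - (c + b * Rpower u p) * (2 * Ar t r - x2 r + (n - 1) / r * (A t r - x1 r) - (n - 1) / r ^ 2 * xh r)
    - 2 * a * Rpower u (p - 1) * (Ar t r * u + Br t r) = 0 /\
  (Att t r * u + Btt t r)
    - (c + b * Rpower u p) * ((Arr t r * u + Brr t r) + (n - 1) / r * (Ar t r * u + Br t r)) = 0.
Proof.
  intros Hr Hu.
  pose proof (Hres t r u 0 0 0 0 Hr Hu) as H1. pose proof (Hres t r u 0 0 0 1 Hr Hu) as H2.
  pose proof (Hres t r u 0 1 0 0 Hr Hu) as H3. pose proof (Hres t r u 0 (-1) 0 0 Hr Hu) as H4.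
  tau_xi_jets H1. tau_xi_jets H2. tau_xi_jets H3. tau_xi_jets H4.
  rewrite ?eta_val, ?eta_t, ?eta_r, ?eta_u, ?eta_ut, ?eta_ur, ?eta_tt, ?eta_rr, ?eta_uu
    in H1, H2, H3, H4 by auto.
  lra.
Qed.

(* Separating the powers 1, u^p, u^(p-1) in the first equation. *)
Lemma eta_coefficients t r : 0 < r ->
  p * A t r = 2 * x1 r - 2 * t1 t /\
  (p <> 1 -> B t r = 0 /\ c * (2 * x1 r - 2 * t1 t) = 0) /\
  (p = 1 -> c * (2 * x1 r - 2 * t1 t) = b * B t r).
Proof.
  intros Hr.
  destruct (separate_powers p (c * (2 * x1 r - 2 * t1 t)) (b * (2 * x1 r - 2 * t1 t) - b * p * A t r)
              (- (b * p * B t r)) hp) as [K1 [K2 K3]].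
  { intros u Hu. destruct (determining_system t r u Hr Hu) as [E1 _].
    rewrite (Rpower_pred_mul u p Hu) in E1 |- *. lra. }
  split; [|split].
  - apply (Rmult_eq_reg_l b); auto. lra.
  - intros Hp1. destruct (K2 Hp1) as [K4 K5]. split; [|exact K4].
    assert (K6 : (b * p) * B t r = 0) by lra.
    destruct (Rmult_integral _ _ K6) as [K7|K7]; [|exact K7].
    destruct (Rmult_integral _ _ K7); contradiction.
  - intros Hp1. specialize (K3 Hp1). rewrite Hp1 in K3. lra.
Qed.

(* The u^p-coefficient of the second equation. *)
Lemma radial_equation t r : 0 < r ->
  b * (x2 r - (n - 1) / r * x1 r + (n - 1) / r ^ 2 * xh r - 2 * Ar t r) = 2 * a * Ar t r.
Proof.
  intros Hr.
  destruct (separate_powers p (c * (x2 r - (n - 1) / r * x1 r + (n - 1) / r ^ 2 * xh r - 2 * Ar t r))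
     (b * (x2 r - (n - 1) / r * x1 r + (n - 1) / r ^ 2 * xh r - 2 * Ar t r) - 2 * a * Ar t r)
     (- (2 * a * Br t r)) hp) as [K1 _].
  { intros u Hu. destruct (determining_system t r u Hr Hu) as [E1 [E3 _]].
    assert (K : (n - 1) / r * ((A t r - 2 * t1 t) * (c + b * Rpower u p)
      - b * p * Rpower u (p - 1) * (A t r * u + B t r) - (c + b * Rpower u p) * (A t r - 2 * x1 r)) = 0)
      by (rewrite E1; ring).
    rewrite (Rpower_pred_mul u p Hu) in E3, K |- *. lra. }
  lra.
Qed.

Lemma B_derivs_zero t r : 0 < r -> p <> 1 -> Btt t r = 0 /\ Brr t r = 0 /\ Br t r = 0.
Proof.
  intros Hr Hp1.
  assert (B0 : forall t r, 0 < r -> B t r = 0) by (intros; apply eta_coefficients; auto).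
  assert (Bt0 : forall t r, 0 < r -> Bt t r = 0)
    by (intros s q Hq; apply (deriv_const_all (fun s => B s q) s _ 0); [intros; auto| apply B_dt; auto]).
  assert (Br0 : forall t r, 0 < r -> Br t r = 0)
    by (intros s q Hq; apply (deriv_const_pos (fun q => B s q) q _ 0); [intros; auto| auto| apply B_dr; auto]).
  split; [|split; [|auto]].
  - apply (deriv_const_all (fun s => Bt s r) t _ 0); [intros; auto| apply Bt_dt; auto].
  - apply (deriv_const_pos (fun s => Br t s) r _ 0); [intros; auto| auto| apply Br_dr; auto].
Qed.

Lemma second_order_conditions t r : 0 < r ->
  Arr t r + (n - 1) / r * Ar t r = 0 /\ (p <> 1 -> Att t r = 0).
Proof.
  intros Hr. destruct (Req_dec p 1) as [Hp1|Hp1].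
  - destruct (quadratic_zero (Btt t r - c * (Brr t r + (n - 1) / r * Br t r))
       (Att t r - c * (Arr t r + (n - 1) / r * Ar t r) - b * (Brr t r + (n - 1) / r * Br t r))
       (- b * (Arr t r + (n - 1) / r * Ar t r))) as [K _].
    { intros u Hu. destruct (determining_system t r u Hr Hu) as [_ [_ E4]].
      rewrite Hp1, Rpower_1 in E4 by auto. lra. }
    split; [|intro; contradiction].
    assert (K' : b * (Arr t r + (n - 1) / r * Ar t r) = 0) by lra.
    destruct (Rmult_integral _ _ K'); [contradiction| auto].
  - destruct (B_derivs_zero t r Hr Hp1) as [Btt0 [Brr0 Br0]].
    destruct (separate_powers p (Att t r - c * (Arr t r + (n - 1) / r * Ar t r))
       (- b * (Arr t r + (n - 1) / r * Ar t r)) 0 hp) as [K1 [K2 _]].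
    { intros u Hu. destruct (determining_system t r u Hr Hu) as [_ [_ E4]].
      rewrite Btt0, Brr0, Br0, (Rpower_pred_mul u p Hu) in E4. rewrite (Rpower_pred_mul u p Hu).
      apply (Rmult_eq_reg_l u); [|lra]. lra. }
    assert (LA : Arr t r + (n - 1) / r * Ar t r = 0).
    { assert (K : b * (Arr t r + (n - 1) / r * Ar t r) = 0) by lra.
      destruct (Rmult_integral _ _ K); [contradiction| auto]. }
    split; [exact LA|]. intros _. destruct (K2 Hp1) as [K3 _]. rewrite LA in K3. lra.
Qed.

(* Differentiating p A = 2 x1 - 2 t1 expresses the derivatives of A through
   those of tau and xi. *)
Lemma Ar_val t r : 0 < r -> Ar t r = 2 * x2 r / p.
Proof.
  intros Hr. apply (deriv_unique_pos (fun s => A t s) (fun s => / p * (2 * x1 s - 2 * t1 t)) r);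
    [| exact Hr| apply A_dr; auto|].
  - intros s Hs. rewrite <- (proj1 (eta_coefficients t s Hs)). field. auto.
  - apply (dpl_scal _ (/ p) r (2 * x2 r - 0)); [|unfold Rdiv; ring].
    apply (dpl_minus _ _ r (2 * x2 r) 0); [apply (dpl_scal x1 2 r (x2 r)); [apply x1_deriv; auto| ring]
      | apply derivable_pt_lim_const| ring].
Qed.

Lemma Arr_val t r : 0 < r -> Arr t r = 2 * x3 r / p.
Proof.
  intros Hr. apply (deriv_unique_pos (fun s => Ar t s) (fun s => / p * (2 * x2 s)) r);
    [| exact Hr| apply Ar_dr; auto|].
  - intros s Hs. rewrite Ar_val by auto. unfold Rdiv. ring.
  - apply (dpl_scal _ (/ p) r (2 * x3 r)); [|unfold Rdiv; ring].
    apply (dpl_scal x2 2 r (x3 r)); [apply x2_deriv; auto| ring].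
Qed.

Lemma At_val t r : 0 < r -> At t r = - 2 * t2 t / p.
Proof.
  intros Hr. apply (deriv_unique_all (fun s => A s r) (fun s => / p * (2 * x1 r - 2 * t1 s)) t);
    [| apply A_dt; auto|].
  - intros s. rewrite <- (proj1 (eta_coefficients s r Hr)). field. auto.
  - apply (dpl_scal _ (/ p) t (0 - 2 * t2 t)); [|unfold Rdiv; ring].
    apply (dpl_minus _ _ t 0 (2 * t2 t)); [apply derivable_pt_lim_const
      | apply (dpl_scal t1 2 t (t2 t)); [apply t1_deriv| ring]| ring].
Qed.

Lemma Att_val t r : 0 < r -> Att t r = - 2 * t3 t / p.
Proof.
  intros Hr. apply (deriv_unique_all (fun s => At s r) (fun s => / p * (- 2 * t2 s)) t);
    [| apply At_dt; auto|].
  - intros s. rewrite At_val by auto. unfold Rdiv. ring.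
  - apply (dpl_scal _ (/ p) t (- 2 * t3 t)); [|unfold Rdiv; ring].
    apply (dpl_scal t2 (-2) t (t3 t)); [apply t2_deriv| ring].
Qed.

(* 2 A_t = tau_tt and p A_t = - 2 tau_tt:  tau_tt (p + 4) = 0. *)
Lemma t2_p4 t : t2 t * (p + 4) = 0.
Proof.
  pose proof (At_tau t 1 ltac:(lra)) as K1. rewrite At_val in K1 by lra.
  replace (t2 t * (p + 4)) with (p * (t2 t - 2 * (-2 * t2 t / p))) by (field; auto).
  rewrite K1. ring.
Qed.

(* tau_tt is constant: it vanishes if p <> -4, and tau_ttt = 0 when p <> 1. *)
Lemma t2_const t : t2 t = t2 0.
Proof.
  destruct (Req_dec p 1) as [Hp1|Hp1].
  - pose proof (t2_p4 t). pose proof (t2_p4 0). rewrite Hp1 in *. lra.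
  - apply (const_all t2). intros x. replace 0 with (t3 x); [apply t2_deriv|].
    destruct (second_order_conditions x 1 ltac:(lra)) as [_ K]. specialize (K Hp1).
    rewrite Att_val in K by lra. apply (Rmult_eq_reg_l (/ p)); [|apply Rinv_neq_0_compat; auto].
    replace (/ p * t3 x) with (- / 2 * (- 2 * t3 x / p)) by (field; auto). rewrite K. ring.
Qed.

Lemma xi_third_order r : 0 < r -> x3 r + (n - 1) / r * x2 r = 0.
Proof.
  intros Hr. destruct (second_order_conditions 0 r Hr) as [K _]. rewrite Ar_val, Arr_val in K by auto.
  replace (x3 r + (n - 1) / r * x2 r) with (p / 2 * (2 * x3 r / p + (n - 1) / r * (2 * x2 r / p)))
    by (field; split; lra).
  rewrite K. ring.
Qed.

Lemma xi_radial_condition r : 0 < r ->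
  b * (x2 r - (n - 1) / r * x1 r + (n - 1) / r ^ 2 * xh r - 4 * x2 r / p) = 4 * a * x2 r / p.
Proof.
  intros Hr. pose proof (radial_equation 0 r Hr) as K. rewrite Ar_val in K by auto.
  replace (4 * x2 r / p) with (2 * (2 * x2 r / p)) by (unfold Rdiv; ring).
  replace (4 * a * x2 r / p) with (2 * a * (2 * x2 r / p)) by (unfold Rdiv; ring). exact K.
Qed.

Lemma determining_reduced : reduced_form a b c p n th t1 t2 xh x1 x2 x3 A B.
Proof.
  split; [|split; [|split; [|split; [|split]]]].
  - intros t. split; [apply th_deriv| split; [apply t1_deriv| apply t2_const]].
  - apply t2_p4.
  - intros r Hr. split; [apply xh_deriv; auto| split; [apply x1_deriv; auto|]].
    split; [apply x2_deriv; auto| apply xi_third_order; auto].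
  - intros t r Hr. apply eta_coefficients; auto.
  - intros t r Hr. apply eta_coefficients; auto.
  - apply xi_radial_condition.
Qed.

End DeterminingEquations.

Lemma symmetry_reduced a b c p n X : p <> 0 -> b <> 0 -> point_symmetry a b c p n X ->
  exists (th t1 t2 xh x1 x2 x3 : R -> R) (A B : R -> R -> R),
    reduced_form a b c p n th t1 t2 xh x1 x2 x3 A B /\
    forall t r u, 0 < r -> 0 < u ->
      vt X t r u = th t /\ vr X t r u = xh r /\ vu X t r u = A t r * u + B t r.
Proof.
  intros hp hb [Dt [Dx [De [[Et HDt] [[Ex HDx] [[Ee HDe] Hres]]]]]].
  exists (th Dt), (t1 Dt), (t2 Dt), (xh Dx), (x1 Dx), (x2 Dx), (x3 Dx), (A De), (B De).
  split; [exact (determining_reduced a b c p n hp hb Dt Dx De HDt HDx HDe Hres)|].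
  intros t r u Hr Hu. rewrite <- Et, <- Ex, <- Ee. split; [|split].
  - exact (tau_val a b c p n hp hb Dt Dx De HDt HDx Hres t r u Hr Hu).
  - exact (xi_val a b c p n hp hb Dt Dx De HDt HDx Hres t r u Hr Hu).
  - exact (eta_val a b c p n hp hb Dt Dx De HDt HDx HDe Hres t r u Hr Hu).
Qed.

Lemma quadratic_of_const_second th t1 t2 :
  (forall t, derivable_pt_lim th t (t1 t)) -> (forall t, derivable_pt_lim t1 t (t2 t)) ->
  (forall t, t2 t = t2 0) ->
  forall t, t1 t = t1 0 + t2 0 * t /\ th t = th 0 + t1 0 * t + t2 0 / 2 * t ^ 2.
Proof.
  intros D1 D2 C2.
  assert (G : forall t, t1 t = t1 0 + t2 0 * t).
  { intros t. assert (K : t1 t - t2 0 * t = t1 0 - t2 0 * 0); [|lra].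
    apply (const_all (fun s => t1 s - t2 0 * s)). intros x.
    apply (dpl_minus _ _ x (t2 x) (t2 0)); [apply D2| |rewrite C2; ring].
    apply (dpl_scal (fun y => y) _ x 1); [apply derivable_pt_lim_id| ring]. }
  intros t. split; [apply G|].
  assert (K : th t - t1 0 * t - t2 0 / 2 * t ^ 2 = th 0 - t1 0 * 0 - t2 0 / 2 * 0 ^ 2); [|simpl in K; lra].
  apply (const_all (fun s => th s - t1 0 * s - t2 0 / 2 * s ^ 2)). intros x.
  apply (dpl_minus _ _ x (t1 x - t1 0) (t2 0 / 2 * (2 * x))).
  - apply (dpl_minus _ _ x (t1 x) (t1 0)); [apply D1| |ring].
    apply (dpl_scal (fun y => y) _ x 1); [apply derivable_pt_lim_id| ring].
  - apply (dpl_scal (fun y => y ^ 2) _ x (2 * x)); [apply dpl_square| ring].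
  - rewrite (G x). field.
Qed.

Lemma euler_solution m y y' : (forall r, 0 < r -> derivable_pt_lim y r (y' r)) ->
  (forall r, 0 < r -> y' r + (m - 1) / r * y r = 0) ->
  forall r, 0 < r -> y r = y 1 * Rpower r (1 - m).
Proof.
  intros D E.
  assert (W : forall r, 0 < r -> Rpower r (m - 1) * y r = Rpower 1 (m - 1) * y 1).
  { intros r Hr. apply (const_pos (fun r => Rpower r (m - 1) * y r)); [|auto|lra].
    intros x Hx. apply (dpl_mult (fun r => Rpower r (m - 1)) y x ((m - 1) * Rpower x (m - 1 - 1)) (y' x)).
    - apply derivable_pt_lim_power; auto.
    - apply D; auto.
    - rewrite (Rpower_minus1 x (m - 1)) by auto. specialize (E x Hx).
      replace (y' x) with (- ((m - 1) / x * y x)) by lra. field. lra. }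
  intros r Hr. specialize (W r Hr). rewrite Rpower_one_base in W.
  replace (1 - m) with (- (m - 1)) by ring. rewrite Rpower_Ropp.
  assert (0 < Rpower r (m - 1)) by apply exp_pos.
  apply (Rmult_eq_reg_l (Rpower r (m - 1))); [|lra]. rewrite W. field. lra.
Qed.

Lemma double_antiderivative xh x1 x2 Ph Ph1 w C :
  (forall r, 0 < r -> derivable_pt_lim xh r (x1 r)) ->
  (forall r, 0 < r -> derivable_pt_lim x1 r (x2 r)) ->
  (forall r, 0 < r -> derivable_pt_lim Ph r (Ph1 r)) ->
  (forall r, 0 < r -> derivable_pt_lim Ph1 r (w r)) ->
  (forall r, 0 < r -> x2 r = C * w r) ->
  exists D E, forall r, 0 < r -> x1 r = C * Ph1 r + D /\ xh r = C * Ph r + D * r + E.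
Proof.
  intros Dxh Dx1 DPh DPh1 Hx2.
  set (D := x1 1 - C * Ph1 1).
  assert (E1 : forall r, 0 < r -> x1 r = C * Ph1 r + D)
    by (intros r Hr; exact (antiderivative_pos x1 x2 Ph1 w C Dx1 DPh1 Hx2 r Hr)).
  exists D, (xh 1 - 1 * (C * Ph 1 + D * 1)). intros r Hr. split; [auto|].
  assert (GD : forall s, 0 < s -> derivable_pt_lim (fun r => C * Ph r + D * r) s (C * Ph1 s + D)).
  { intros s Hs. apply (dpl_plus _ _ s (C * Ph1 s) D); [apply (dpl_scal Ph C s (Ph1 s)); auto| |ring].
    apply (dpl_scal (fun y => y) D s 1); [apply derivable_pt_lim_id| ring]. }
  assert (GE : forall s, 0 < s -> x1 s = 1 * (C * Ph1 s + D)) by (intros s Hs; rewrite E1 by auto; ring).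
  rewrite (antiderivative_pos xh x1 _ _ 1 Dxh GD GE r Hr). ring.
Qed.

Section Classification.

Variables a b c p n : R.
Hypotheses (hn : n <> 1) (hp : p <> 0) (hb : b <> 0).
Variables (th t1 t2 xh x1 x2 x3 : R -> R) (A B : R -> R -> R).
Hypothesis Hth : forall t, derivable_pt_lim th t (t1 t).
Hypothesis Ht1 : forall t, derivable_pt_lim t1 t (t2 t).
Hypothesis Ht2 : forall t, t2 t = t2 0.
Hypothesis Hp4 : t2 0 * (p + 4) = 0.
Hypothesis Hxh : forall r, 0 < r -> derivable_pt_lim xh r (x1 r).
Hypothesis Hx1 : forall r, 0 < r -> derivable_pt_lim x1 r (x2 r).
Hypothesis Hx2 : forall r, 0 < r -> derivable_pt_lim x2 r (x3 r).
Hypothesis Hx3 : forall r, 0 < r -> x3 r + (n - 1) / r * x2 r = 0.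
Hypothesis HA : forall t r, 0 < r -> p * A t r = 2 * x1 r - 2 * t1 t.
Hypothesis HB : forall t r, 0 < r -> (p <> 1 -> B t r = 0 /\ c * (2 * x1 r - 2 * t1 t) = 0) /\
                                     (p = 1 -> c * (2 * x1 r - 2 * t1 t) = b * B t r).
Hypothesis Hrad : forall r, 0 < r ->
  b * (x2 r - (n - 1) / r * x1 r + (n - 1) / r ^ 2 * xh r - 4 * x2 r / p) = 4 * a * x2 r / p.

Definition Cx := x2 1.

Lemma x2_val r : 0 < r -> x2 r = Cx * Rpower r (1 - n).
Proof. apply (euler_solution n x2 x3); auto. Qed.

Lemma no_cond3_trivial : ~ cond3 c p -> Cx = 0 /\ t2 0 = 0 /\ forall t r, 0 < r -> x1 r = t1 t.
Proof.
  intros c3. assert (p1 : p <> 1) by (intro E; apply c3; unfold cond3; rewrite E; ring).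
  assert (Hc : c <> 0) by (intro E; apply c3; unfold cond3; rewrite E; ring).
  assert (L : forall t r, 0 < r -> x1 r = t1 t).
  { intros t r Hr. destruct (proj1 (HB t r Hr) p1) as [_ K].
    destruct (Rmult_integral _ _ K); [contradiction| lra]. }
  split; [|split; [|exact L]].
  - apply (deriv_const_pos x1 1 _ (t1 0)); [intros; apply L; auto| lra| apply Hx1; lra].
  - apply (deriv_const_all t1 0 _ (x1 1)); [intros; symmetry; apply L; lra| apply Ht1].
Qed.

Definition radial_shape (k4 k5 D : R) : Prop :=
  (~ cond4 a b c p n -> k4 = 0) /\ (~ cond5 a b c p n -> k5 = 0) /\
  forall r, 0 < r ->
    xh r = k4 * (a + b + (1 - p) * c) * Rpower r (3 - n) + k5 * (/ 2 * p * b) * r * ln r + D * r /\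
    x1 r = p * b / 2 * (k4 * (2 - n) * Rpower r (2 - n) + k5 * (1 + ln r)) + D.

Lemma cond3_of_Cx : Cx <> 0 -> cond3 c p.
Proof. intros HC. apply NNPP. intro c3. apply HC, no_cond3_trivial, c3. Qed.

(* n = 2: xi'' = Cx / r, and the radial equation forces (a + b) Cx = 0 and
   kills the constant of integration; Cx r ln r is a multiple of X5. *)
Lemma radial_shape_n2 : n = 2 -> exists k4 k5 D, radial_shape k4 k5 D.
Proof.
  intros Hn2.
  destruct (double_antiderivative xh x1 x2 (fun r => r * ln r) (fun r => 1 + ln r) (fun r => / r) Cx Hxh Hx1)
    as [D [E HE]].
  { intros r Hr. apply (dpl_mult (fun y => y) ln r 1 (/ r)); [apply derivable_pt_lim_id
      | apply derivable_pt_lim_ln; auto| field; lra]. }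
  { intros r Hr. apply (dpl_plus _ _ r 0 (/ r)); [apply derivable_pt_lim_const
      | apply derivable_pt_lim_ln; auto| ring]. }
  { intros r Hr. rewrite x2_val, Hn2 by auto. replace (1 - 2) with (-1) by ring. rewrite Rpower_neg1; auto. }
  assert (Q : forall r, 0 < r -> - 4 * (a + b) * Cx * Rpower r 1 + p * b * E = 0).
  { intros r Hr. pose proof (Hrad r Hr) as K. destruct (HE r Hr) as [E1 E0].
    rewrite x2_val, E1, E0, Hn2 in K by auto. replace (1 - 2) with (-1) in K by ring.
    rewrite Rpower_neg1 in K by auto. rewrite Rpower_1 by auto.
    match type of K with ?L = ?R =>
      replace (- 4 * (a + b) * Cx * r + p * b * E) with (p * r ^ 2 * (L - R)) by (field; lra) end.
    rewrite K. ring. }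
  destruct (power_affine_zero _ _ 1 ltac:(lra) Q) as [Q1 Q2].
  exists 0, (2 * Cx / (p * b)), D. split; [|split].
  - auto.
  - intros Hc5. destruct (Req_dec Cx 0) as [Z|Z]; [rewrite Z; unfold Rdiv; ring|].
    exfalso. apply Hc5. split; [apply cond3_of_Cx; auto| split; [auto|]].
    assert (Hab : (a + b) * Cx = 0) by lra. destruct (Rmult_integral _ _ Hab); [lra| contradiction].
  - intros r Hr. destruct (HE r Hr) as [E1 E0]. rewrite E1, E0, Hn2.
    assert (E = 0) as -> by (destruct (Rmult_integral _ _ Q2) as [K|K];
      [destruct (Rmult_integral _ _ K); contradiction| auto]).
    split; field; auto.
Qed.

(* n = 3: xi'' = Cx / r^2, and the radial equation forces Cx = 0. *)
Lemma radial_shape_n3 : n = 3 -> exists k4 k5 D, radial_shape k4 k5 D.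
Proof.
  intros Hn3.
  destruct (double_antiderivative xh x1 x2 (fun r => -1 * ln r) (fun r => -1 * Rpower r (-1))
              (fun r => Rpower r (1 - n)) Cx Hxh Hx1) as [D [E HE]].
  { intros r Hr. apply (dpl_scal ln (-1) r (/ r)); [apply derivable_pt_lim_ln; auto|].
    rewrite Rpower_neg1 by auto. ring. }
  { intros r Hr. apply (dpl_scal (fun y => Rpower y (-1)) (-1) r ((-1) * Rpower r (-1 - 1)));
      [apply derivable_pt_lim_power; auto| rewrite Hn3; replace (1 - 3) with (-1 - 1) by ring; ring]. }
  { exact x2_val. }
  assert (Q : forall r, 0 < r -> p * b * (3 * Cx - 2 * Cx * ln r + 2 * E) - 4 * (a + b) * Cx = 0).
  { intros r Hr. pose proof (Hrad r Hr) as K. destruct (HE r Hr) as [E1 E0].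
    rewrite x2_val, E1, E0, Hn3 in K by auto. replace (1 - 3) with (-1 - 1) in K by ring.
    rewrite Rpower_minus1, Rpower_neg1 in K by auto.
    match type of K with ?L = ?R =>
      replace (p * b * (3 * Cx - 2 * Cx * ln r + 2 * E) - 4 * (a + b) * Cx)
        with (p * r ^ 2 * (L - R)) by (field; lra) end.
    rewrite K. ring. }
  pose proof (Q 1 ltac:(lra)) as Q1. pose proof (Q (exp 1) ltac:(apply exp_pos)) as Qe.
  rewrite ln_1 in Q1. rewrite ln_exp in Qe.
  assert (C0 : Cx = 0).
  { assert (K : (p * b) * Cx = 0) by lra. destruct (Rmult_integral _ _ K) as [K'|K']; auto.
    destruct (Rmult_integral _ _ K'); contradiction. }
  assert (E0 : E = 0).
  { rewrite C0 in Q1. assert (K : (p * b) * E = 0) by lra.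
    destruct (Rmult_integral _ _ K) as [K'|K']; auto. destruct (Rmult_integral _ _ K'); contradiction. }
  exists 0, 0, D. split; [auto| split; [auto|]].
  intros r Hr. destruct (HE r Hr) as [K1 K0]. rewrite K1, K0, C0, E0. split; ring.
Qed.

(* n <> 2, 3: xi'' = Cx r^(1-n), and the radial equation forces either Cx = 0
   or the relation (a + b + (1 - p) c)(n - 3) = b p (n/2 - 1) of X4. *)
Lemma radial_shape_generic : n <> 2 -> n <> 3 -> exists k4 k5 D, radial_shape k4 k5 D.
Proof.
  intros n2 n3. assert (n2' : 2 - n <> 0) by lra. assert (n3' : 3 - n <> 0) by lra.
  destruct (double_antiderivative xh x1 x2 (fun r => / ((2 - n) * (3 - n)) * Rpower r (3 - n))
              (fun r => / (2 - n) * Rpower r (2 - n)) (fun r => Rpower r (1 - n)) Cx Hxh Hx1)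
    as [D [E HE]].
  { intros r Hr. apply (dpl_scal (fun y => Rpower y (3 - n)) _ r ((3 - n) * Rpower r (3 - n - 1)));
      [apply derivable_pt_lim_power; auto| replace (3 - n - 1) with (2 - n) by ring; field; auto]. }
  { intros r Hr. apply (dpl_scal (fun y => Rpower y (2 - n)) _ r ((2 - n) * Rpower r (2 - n - 1)));
      [apply derivable_pt_lim_power; auto| replace (2 - n - 1) with (1 - n) by ring; field; auto]. }
  { exact x2_val. }
  set (K1 := Cx * (2 * p * b * (n - 2) / (n - 3) - 4 * (a + b))).
  set (K2 := p * b * (n - 1) * E).
  assert (Q : forall r, 0 < r -> K1 * Rpower r (3 - n) + K2 = 0).
  { intros r Hr. pose proof (Hrad r Hr) as K. destruct (HE r Hr) as [E1 E0].
    rewrite x2_val, E1, E0 in K by auto.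
    replace (1 - n) with ((3 - n) - 1 - 1) in K by ring.
    replace (2 - n) with ((3 - n) - 1) in K by ring.
    rewrite !Rpower_minus1 in K by auto.
    match type of K with ?L = ?R => replace (K1 * Rpower r (3 - n) + K2) with (p * r ^ 2 * (L - R)) end.
    - rewrite K. ring.
    - unfold K1, K2. field. repeat split; lra. }
  destruct (power_affine_zero _ _ (3 - n) n3' Q) as [Q1 Q2].
  assert (E0 : E = 0).
  { unfold K2 in Q2. destruct (Rmult_integral _ _ Q2) as [K|K]; auto.
    destruct (Rmult_integral _ _ K) as [K'|K']; [|lra]. destruct (Rmult_integral _ _ K'); contradiction. }
  destruct (Req_dec Cx 0) as [C0|C0].
  { exists 0, 0, D. split; [auto| split; [auto|]].
    intros r Hr. destruct (HE r Hr) as [F1 F0]. rewrite F1, F0, C0, E0. split; ring. }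
  assert (cc : (1 - p) * c = 0) by (pose proof (cond3_of_Cx C0); unfold cond3 in *; lra).
  assert (Rel : a + b = p * b * (n - 2) / (2 * (n - 3))).
  { unfold K1 in Q1. destruct (Rmult_integral _ _ Q1) as [K|K]; [contradiction|].
    apply (Rmult_eq_reg_l 4); [|lra]. replace (4 * (a + b)) with (2 * p * b * (n - 2) / (n - 3)) by lra.
    field. lra. }
  assert (Kne : a + b + (1 - p) * c <> 0).
  { rewrite cc, Rplus_0_r, Rel. unfold Rdiv.
    repeat apply Rmult_integral_contrapositive_currified; auto; [lra|]. apply Rinv_neq_0_compat. lra. }
  exists (Cx / ((2 - n) * (3 - n) * (a + b + (1 - p) * c))), 0, D. split; [|split; [auto|]].
  - intros Hc4. exfalso. apply Hc4. split; [apply cond3_of_Cx; auto| split; [auto|]].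
    rewrite cc, Rplus_0_r, Rel. field. lra.
  - intros r Hr. destruct (HE r Hr) as [F1 F0]. rewrite F1, F0, E0. split.
    + field. auto.
    + rewrite cc, Rplus_0_r in *. rewrite Rel. field. repeat split; lra.
Qed.

Lemma radial_shape_exists : exists k4 k5 D, radial_shape k4 k5 D.
Proof.
  destruct (Req_dec n 2) as [n2|n2]; [apply radial_shape_n2; auto|].
  destruct (Req_dec n 3) as [n3|n3]; [apply radial_shape_n3; auto|].
  apply radial_shape_generic; auto.
Qed.

Lemma classify_cond3 k4 k5 D : cond3 c p -> radial_shape k4 k5 D ->
  exists k1 k2 k3 k6 : R, (~ cond6 c p -> k6 = 0) /\
    forall t r u, 0 < r -> 0 < u ->
      th t = vt (comb a b c p n k1 k2 k3 k4 k5 k6) t r u /\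
      xh r = vr (comb a b c p n k1 k2 k3 k4 k5 k6) t r u /\
      A t r * u + B t r = vu (comb a b c p n k1 k2 k3 k4 k5 k6) t r u.
Proof.
  intros c3 [_ [_ Hsh]]. set (si := t2 0 / 2).
  assert (cc : (1 - p) * c = 0) by (unfold cond3 in c3; lra).
  assert (Bc : forall t r, 0 < r -> b * B t r = c * A t r).
  { intros t r Hr. destruct (HB t r Hr) as [K1 K2]. destruct (Req_dec p 1) as [Hp1|Hp1].
    - rewrite <- (K2 Hp1), <- (HA t r Hr), Hp1. ring.
    - rewrite (proj1 (K1 Hp1)). replace c with 0 by (destruct (Rmult_integral _ _ c3); lra). ring. }
  assert (si6 : si <> 0 -> cond6 c p).
  { intros Hs. assert (p = -4) by (destruct (Rmult_integral _ _ Hp4); [unfold si in Hs; lra| lra]).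
    split; [destruct (Rmult_integral _ _ c3); lra| auto]. }
  exists (th 0), (t1 0), (2 * (D - t1 0) / (p * b)), si.
  split; [intro H6; destruct (Req_dec si 0); [auto| exfalso; auto]|].
  intros t r u Hr Hu. destruct (quadratic_of_const_second th t1 t2 Hth Ht1 Ht2 t) as [T1 T0].
  destruct (Hsh r Hr) as [S0 S1].
  cbn [comb vf_add vf_scale X1 X2 X3 X4 X5 X6 vt vr vu]. split; [|split].
  - rewrite T0. unfold si. field; repeat split; auto.
  - rewrite S0. field; repeat split; auto.
  - assert (AE : A t r = (2 * x1 r - 2 * t1 t) / p) by (rewrite <- HA by auto; field; auto).
    replace (B t r) with (c * A t r / b) by (rewrite <- Bc by auto; field; auto).
    rewrite AE, S1, T1, cc. fold si. replace (t2 0) with (2 * si) by (unfold si; field).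
    destruct (Req_dec si 0) as [Es|Es].
    + rewrite Es. destruct (Req_dec p 1) as [Hp1|Hp1].
      * rewrite Hp1. field; repeat split; auto.
      * replace c with 0 by (destruct (Rmult_integral _ _ c3); lra). field; repeat split; auto.
    + destruct (si6 Es) as [-> ->]. field; repeat split; auto.
Qed.

Lemma classify_no_cond3 k4 k5 D : ~ cond3 c p -> radial_shape k4 k5 D ->
  forall t r u, 0 < r -> 0 < u ->
    th t = vt (comb a b c p n (th 0) (t1 0) 0 0 0 0) t r u /\
    xh r = vr (comb a b c p n (th 0) (t1 0) 0 0 0 0) t r u /\
    A t r * u + B t r = vu (comb a b c p n (th 0) (t1 0) 0 0 0 0) t r u.
Proof.
  intros c3 [Hk4 [Hk5 Hsh]] t r u Hr Hu.
  destruct (no_cond3_trivial c3) as [_ [T2 L]].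
  assert (p1 : p <> 1) by (intro E; apply c3; unfold cond3; rewrite E; ring).
  rewrite Hk4, Hk5 in Hsh by (intros [K _]; contradiction).
  destruct (quadratic_of_const_second th t1 t2 Hth Ht1 Ht2 t) as [T1 T0].
  destruct (Hsh r Hr) as [S0 S1]. destruct (Hsh 1 ltac:(lra)) as [_ S1'].
  assert (D1 : D = t1 0) by (rewrite <- (L 0 1) by lra; rewrite S1'; ring).
  assert (A0 : A t r = 0).
  { apply (Rmult_eq_reg_l p); auto. rewrite HA, (L t r), T1, T2 by auto. ring. }
  cbn [comb vf_add vf_scale X1 X2 X3 X4 X5 X6 vt vr vu]. split; [|split].
  - rewrite T0, T2. field.
  - rewrite S0, D1. ring.
  - rewrite A0, (proj1 (proj1 (HB t r Hr) p1)). ring.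
Qed.

Lemma reduced_classification : exists k1 k2 k3 k4 k5 k6 : R,
  (~ cond3 c p -> k3 = 0) /\ (~ cond4 a b c p n -> k4 = 0) /\
  (~ cond5 a b c p n -> k5 = 0) /\ (~ cond6 c p -> k6 = 0) /\
  forall t r u, 0 < r -> 0 < u ->
    th t = vt (comb a b c p n k1 k2 k3 k4 k5 k6) t r u /\
    xh r = vr (comb a b c p n k1 k2 k3 k4 k5 k6) t r u /\
    A t r * u + B t r = vu (comb a b c p n k1 k2 k3 k4 k5 k6) t r u.
Proof.
  destruct radial_shape_exists as [k4 [k5 [D Hsh]]].
  destruct (classic (cond3 c p)) as [c3|c3].
  - destruct (classify_cond3 k4 k5 D c3 Hsh) as [k1 [k2 [k3 [k6 [C6 H]]]]].
    exists k1, k2, k3, k4, k5, k6. destruct Hsh as [C4 [C5 _]].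
    split; [intro; contradiction| auto].
  - exists (th 0), (t1 0), 0, 0, 0, 0.
    split; [auto| split; [auto| split; [auto| split; [auto|]]]].
    exact (classify_no_cond3 k4 k5 D c3 Hsh).
Qed.

End Classification.

Lemma symmetry_classification a b c p n X : n <> 1 -> p <> 0 -> b <> 0 ->
  point_symmetry a b c p n X ->
  exists k1 k2 k3 k4 k5 k6 : R,
    (~ cond3 c p -> k3 = 0) /\ (~ cond4 a b c p n -> k4 = 0) /\
    (~ cond5 a b c p n -> k5 = 0) /\ (~ cond6 c p -> k6 = 0) /\
    vf_eq X (comb a b c p n k1 k2 k3 k4 k5 k6).
Proof.
  intros hn hp hb HS.
  destruct (symmetry_reduced a b c p n X hp hb HS)
    as [th [t1 [t2 [xh [x1 [x2 [x3 [A [B [[Ht [Hp4 [Hx [HA [HB Hrad]]]]] HX]]]]]]]]]].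
  destruct (reduced_classification a b c p n hn hp hb th t1 t2 xh x1 x2 x3 A B
              (fun t => proj1 (Ht t)) (fun t => proj1 (proj2 (Ht t))) (fun t => proj2 (proj2 (Ht t)))
              Hp4 (fun r Hr => proj1 (Hx r Hr)) (fun r Hr => proj1 (proj2 (Hx r Hr)))
              (fun r Hr => proj1 (proj2 (proj2 (Hx r Hr)))) (fun r Hr => proj2 (proj2 (proj2 (Hx r Hr))))
              HA HB Hrad)
    as [k1 [k2 [k3 [k4 [k5 [k6 [C3 [C4 [C5 [C6 Hcomb]]]]]]]]]].
  exists k1, k2, k3, k4, k5, k6. repeat (split; [assumption|]).
  intros t r u Hr Hu. destruct (HX t r u Hr Hu) as [E0 [E1 E2]]. destruct (Hcomb t r u Hr Hu) as [F0 [F1 F2]].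
  rewrite E0, E1, E2, F0, F1, F2. auto.
Qed.

Lemma generic_case_symmetries a b c p n X : n <> 1 -> p <> 0 -> b <> 0 -> c <> 0 -> p <> 1 ->
  (point_symmetry a b c p n X <->
   exists k1 k2 : R, vf_eq X (vf_add (vf_scale k1 X1) (vf_scale k2 X2))).
Proof.
  intros hn hp hb hc hp1.
  assert (n3 : ~ cond3 c p).
  { unfold cond3. intro H. destruct (Rmult_integral _ _ H); [contradiction| apply hp1; lra]. }
  assert (n4 : ~ cond4 a b c p n) by (intros [H _]; apply n3; exact H).
  assert (n5 : ~ cond5 a b c p n) by (intros [H _]; apply n3; exact H).
  assert (n6 : ~ cond6 c p) by (intros [H _]; contradiction).
  assert (E : forall k1 k2 t r u, 0 < r -> 0 < u ->
     vt (comb a b c p n k1 k2 0 0 0 0) t r u = vt (vf_add (vf_scale k1 X1) (vf_scale k2 X2)) t r u /\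
     vr (comb a b c p n k1 k2 0 0 0 0) t r u = vr (vf_add (vf_scale k1 X1) (vf_scale k2 X2)) t r u /\
     vu (comb a b c p n k1 k2 0 0 0 0) t r u = vu (vf_add (vf_scale k1 X1) (vf_scale k2 X2)) t r u)
    by (intros; cbn; repeat split; ring).
  split.
  - intros HS. destruct (symmetry_classification a b c p n X hn hp hb HS)
      as [k1 [k2 [k3 [k4 [k5 [k6 [C3 [C4 [C5 [C6 HX]]]]]]]]]].
    rewrite (C3 n3), (C4 n4), (C5 n5), (C6 n6) in HX.
    exists k1, k2. intros t r u Hr Hu. destruct (HX t r u Hr Hu) as [E0 [E1 E2]].
    destruct (E k1 k2 t r u Hr Hu) as [F0 [F1 F2]]. rewrite E0, E1, E2. auto.
  - intros [k1 [k2 HX]]. apply (comb_symmetry a b c p n hb hp X k1 k2 0 0 0 0); auto.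
    intros t r u Hr Hu. destruct (HX t r u Hr Hu) as [E0 [E1 E2]].
    destruct (E k1 k2 t r u Hr Hu) as [F0 [F1 F2]]. rewrite E0, E1, E2, F0, F1, F2. auto.
Qed.

Lemma X1_X2_independent k1 k2 :
  vf_eq (vf_add (vf_scale k1 X1) (vf_scale k2 X2)) vf_zero -> k1 = 0 /\ k2 = 0.
Proof.
  intros H. destruct (H 0 1 1 ltac:(lra) ltac:(lra)) as [E1 _].
  destruct (H 1 1 1 ltac:(lra) ltac:(lra)) as [E2 _]. simpl in *. lra.
Qed.

Theorem theorem1 (a b c p n : R) (hn : n <> 1) (hp : p <> 0) (hb : b <> 0) :
  (* the symmetry algebra is spanned by X1, X2 and those of X3..X6 whose
     conditions hold *)
  (forall X : VF, point_symmetry a b c p n X <->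
     exists k1 k2 k3 k4 k5 k6 : R,
       (~ cond3 c p -> k3 = 0) /\ (~ cond4 a b c p n -> k4 = 0) /\
       (~ cond5 a b c p n -> k5 = 0) /\ (~ cond6 c p -> k6 = 0) /\
       vf_eq X (vf_add (vf_scale k1 X1) (vf_add (vf_scale k2 X2)
               (vf_add (vf_scale k3 (X3 b c p)) (vf_add (vf_scale k4 (X4 a b c p n))
               (vf_add (vf_scale k5 (X5 b c p)) (vf_scale k6 X6))))))) /\
  (* c <> 0, p <> 1: the algebra is 2-dimensional, spanned by X1, X2 *)
  (c <> 0 -> p <> 1 ->
     (forall X : VF, point_symmetry a b c p n X <->
        exists k1 k2 : R, vf_eq X (vf_add (vf_scale k1 X1) (vf_scale k2 X2))) /\
     (forall k1 k2 : R, vf_eq (vf_add (vf_scale k1 X1) (vf_scale k2 X2)) vf_zero ->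
        k1 = 0 /\ k2 = 0)) /\
  (* commutator table *)
  is_bracket X1 X2 X1 /\
  (cond3 c p -> is_bracket X1 (X3 b c p) vf_zero /\ is_bracket X2 (X3 b c p) vf_zero) /\
  (cond4 a b c p n ->
     is_bracket X1 (X4 a b c p n) vf_zero /\
     is_bracket X2 (X4 a b c p n) (vf_scale (2 - n) (X4 a b c p n)) /\
     is_bracket (X3 b c p) (X4 a b c p n)
       (vf_scale (p * (1 - n / 2) * b) (X4 a b c p n))) /\
  (cond5 a b c p n ->
     is_bracket X1 (X5 b c p) vf_zero /\
     is_bracket X2 (X5 b c p) (X3 b c p) /\
     is_bracket (X3 b c p) (X5 b c p) (vf_scale (p * b / 2) (X3 b c p))) /\
  (cond6 c p ->
     is_bracket X1 X6 (vf_add (vf_scale 2 X2) (vf_scale (1 / b) (X3 b c p))) /\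
     is_bracket X2 X6 X6 /\
     is_bracket (X3 b c p) X6 vf_zero /\
     (cond4 a b c p n -> is_bracket (X4 a b c p n) X6 vf_zero) /\
     (cond5 a b c p n -> is_bracket (X5 b c p) X6 vf_zero)).
Proof.
  split; [|split; [|split; [apply bracket12| split; [|split; [|split]]]]].
  - intros X. split.
    + exact (symmetry_classification a b c p n X hn hp hb).
    + intros [k1 [k2 [k3 [k4 [k5 [k6 [C3 [C4 [C5 [C6 HX]]]]]]]]]].
      exact (comb_symmetry a b c p n hb hp X k1 k2 k3 k4 k5 k6 C3 C4 C5 C6 HX).
  - intros hc hp1. split; [intro X; apply generic_case_symmetries; auto| apply X1_X2_independent].
  - intros _. split; [apply bracket13| apply bracket23].
  - intros [c3 _]. split; [apply bracket14| split; [apply bracket24| apply bracket34; auto]].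
  - intros _. split; [apply bracket15| split; [apply bracket25| apply bracket35]].
  - intros [c0 p4]. split; [apply bracket16; [auto| split; auto]|].
    split; [apply bracket26| split; [apply bracket36; auto| split]].
    + intros _. apply bracket46; auto.
    + intros _. apply bracket56; auto.
Qed.
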